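(* Let $X$ be an infinite dimensional real Banach space with $dens(X)=\kappa$. Then there is a sequence $(x_\alpha,x^*_\alpha)_{\alpha<\kappa}\subseteq X\times X^*$ such that $x^*_\alpha(x_\alpha)=1$ for all $\alpha<\kappa$ and $x^*_\alpha(x_\beta)=0$ for all $\beta<\alpha<\kappa$. In particular $hL(B_{X^*})=dens(X)$, where $B_{X^*}$ is the dual unit ball with the weak$^*$ topology.
   Context: $dens(X)$ is the least cardinality of a norm-dense subset of $X$. $hL(Z)=\sup\{L(Y):Y\subseteq Z\}$, where $L(Y)$ is the least cardinal $\kappa$ such that every open cover of $Y$ has a subcover of size at most $\kappa$. *)

From Stdlib Require Import Reals.
Open Scope R_scope.

Record RBanach := {
  carrier :> Type;
  vadd : carrier -> carrier -> carrier;
  vopp : carrier -> carrier;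
  vzero : carrier;
  vscal : R -> carrier -> carrier;
  vnorm : carrier -> R;
  vaddA : forall x y z, vadd x (vadd y z) = vadd (vadd x y) z;
  vaddC : forall x y, vadd x y = vadd y x;
  vadd0 : forall x, vadd x vzero = x;
  vaddN : forall x, vadd x (vopp x) = vzero;
  vscal1 : forall x, vscal 1 x = x;
  vscalA : forall a b x, vscal a (vscal b x) = vscal (a * b) x;
  vscalDr : forall a x y, vscal a (vadd x y) = vadd (vscal a x) (vscal a y);
  vscalDl : forall a b x, vscal (a + b) x = vadd (vscal a x) (vscal b x);
  vnorm_ge0 : forall x, 0 <= vnorm x;
  vnorm_eq0 : forall x, vnorm x = 0 -> x = vzero;
  vnormZ : forall a x, vnorm (vscal a x) = Rabs a * vnorm x;
  vnorm_triangle : forall x y, vnorm (vadd x y) <= vnorm x + vnorm y;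
  vcomplete : forall u : nat -> carrier,
    (forall eps, 0 < eps -> exists N, forall m n, (N <= m)%nat -> (N <= n)%nat ->
        vnorm (vadd (u m) (vopp (u n))) < eps) ->
    exists l, forall eps, 0 < eps -> exists N, forall n, (N <= n)%nat ->
        vnorm (vadd (u n) (vopp l)) < eps
}.

Arguments vadd {r}. Arguments vopp {r}. Arguments vzero {r}.
Arguments vscal {r}. Arguments vnorm {r}.

Fixpoint lincomb {X : RBanach} (n : nat) (c : nat -> R) (v : nat -> X) : X :=
  match n with
  | O => vzero
  | S m => vadd (lincomb m c v) (vscal (c m) (v m))
  end.

Definition infinite_dimensional (X : RBanach) : Prop :=
  forall n : nat, exists v : nat -> X, forall c : nat -> R,
    lincomb n c v = vzero -> forall i, (i < n)%nat -> c i = 0.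

Definition is_linear {X : RBanach} (f : X -> R) : Prop :=
  (forall x y, f (vadd x y) = f x + f y) /\ (forall a x, f (vscal a x) = a * f x).

(** Elements of the dual X^* : bounded (= continuous) linear functionals. *)
Definition in_dual {X : RBanach} (f : X -> R) : Prop :=
  is_linear f /\ exists C, forall x, Rabs (f x) <= C * vnorm x.

Definition in_dual_ball {X : RBanach} (f : X -> R) : Prop :=
  is_linear f /\ forall x, Rabs (f x) <= vnorm x.

Definition weak_star_open {X : RBanach} (U : (X -> R) -> Prop) : Prop :=
  forall f, in_dual f -> U f ->
    exists (n : nat) (xs : nat -> X) (eps : R), 0 < eps /\
      forall g, in_dual g ->
        (forall i, (i < n)%nat -> Rabs (g (xs i) - f (xs i)) < eps) -> U g.

Definition card_le (A B : Type) : Prop := exists h : A -> B, forall a a', h a = h a' -> a = a'.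

Definition sub (X : Type) (P : X -> Prop) : Type := {x : X | P x}.

Definition dense {X : RBanach} (D : X -> Prop) : Prop :=
  forall x eps, 0 < eps -> exists d, D d /\ vnorm (vadd x (vopp d)) < eps.

Definition dens_eq (X : RBanach) (I : Type) : Prop :=
  (exists D : X -> Prop, dense D /\ card_le (sub X D) I) /\
  (forall D : X -> Prop, dense D -> card_le I (sub X D)).

(** (I, lt) is a well order of order type an initial ordinal (a cardinal):
    strict total well-founded order whose proper initial segments have
    strictly smaller cardinality than I. *)
Definition initial_ordinal (I : Type) (lt : I -> I -> Prop) : Prop :=
  (forall a, ~ lt a a) /\
  (forall a b c, lt a b -> lt b c -> lt a c) /\
  (forall a b, lt a b \/ a = b \/ lt b a) /\
  well_founded lt /\
  (forall i, ~ card_le I (sub I (fun j => lt j i))).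

Definition lindelof_le {X : RBanach} (Y : (X -> R) -> Prop) (J : Type) : Prop :=
  forall (K : Type) (U : K -> (X -> R) -> Prop),
    (forall k, weak_star_open (U k)) ->
    (forall f, Y f -> exists k, U k f) ->
    exists S : K -> Prop, card_le (sub K S) J /\
      (forall f, Y f -> exists k, S k /\ U k f).

(** hL(B_{X^*}, weak^* ) = |I| where (I, lt) is an initial ordinal:
    hL <= |I| and no cardinal |J| < |I| bounds all L(Y). *)
Definition hL_dual_ball_eq (X : RBanach) (I : Type) : Prop :=
  (forall Y : (X -> R) -> Prop, (forall f, Y f -> in_dual_ball f) -> lindelof_le Y I) /\
  (forall J : Type, card_le J I -> ~ card_le I J ->
     exists Y : (X -> R) -> Prop, (forall f, Y f -> in_dual_ball f) /\ ~ lindelof_le Y J).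

From Stdlib Require Import Reals Lra Lia List Classical ClassicalEpsilon
  FunctionalExtensionality ProofIrrelevance Wf_nat Compare_dec Wellfounded.
Open Scope R_scope.

(** Let [κ = dens X], presented as an initial ordinal [(I, lt)].

    - Hahn–Banach without Zorn's lemma.  A prescription of values is
      [C]-bounded when [|Σ t_k r_k| <= C ‖Σ t_k w_k‖] for all its finite
      combinations.  Such a prescription extends by one point (a supremum in
      [R]); extending along a dense set of size [κ], well-ordered by [I], by
      well-founded recursion and then by density yields a bounded functional.
    - Separation.  A set [Q] of fewer than [κ] points has non-dense span: if
      [Q] is finite, because finite-dimensional subspaces are closed and proper
      (Steinitz exchange); if [Q] is infinite, because its rational
      combinations would form a dense set of size [|Q| < κ] (Hessenberg:
      [|α × α| = |α|]).  Hahn–Banach then gives [x*] with [x*(z) = 1] and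
      [x* = 0] on [Q].
    - Recursion on [I] applied to [Q = {x_β | β < α}] produces the biorthogonal
      system [(x_α, x*_α)], the first half of the theorem.
    - [hL(B_{X*}) <= κ]: weak*-neighbourhoods in the ball are traced by codes
      built from the dense set and rationals, of which there are [κ].
      [hL(B_{X*}) >= κ]: the normalized [x*_α] form a left-separated family,
      so for [|J| < κ] no subcover of size [|J|] exists. *)


Definition vsub {X : RBanach} (x y : X) : X := vadd x (vopp y).

Lemma vadd_cancel (X : RBanach) (a b c : X) : vadd a b = vadd a c -> b = c.
Proof.
  intros H.
  assert (E : vadd (vopp a) (vadd a b) = vadd (vopp a) (vadd a c)) by now rewrite H.
  rewrite !vaddA, (vaddC _ (vopp a) a), vaddN, (vaddC _ vzero b), (vaddC _ vzero c), !vadd0 in E.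
  exact E.
Qed.

Lemma vadd0l (X : RBanach) (x : X) : vadd vzero x = x.
Proof. rewrite vaddC; apply vadd0. Qed.

Lemma vscal0 (X : RBanach) (x : X) : vscal 0 x = vzero.
Proof. apply (vadd_cancel X (vscal 0 x)). rewrite vadd0, <- vscalDl. f_equal. ring. Qed.

Lemma vscal0r (X : RBanach) (a : R) : vscal a (@vzero X) = vzero.
Proof. apply (vadd_cancel X (vscal a vzero)). now rewrite vadd0, <- vscalDr, vadd0. Qed.

Lemma vnorm0 (X : RBanach) : vnorm (@vzero X) = 0.
Proof. rewrite <- (vscal0 X vzero), vnormZ, Rabs_R0. ring. Qed.

Lemma vopp_scal (X : RBanach) (x : X) : vopp x = vscal (-1) x.
Proof.
  apply (vadd_cancel X x). rewrite vaddN, <- (vscal1 X x) at 1.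
  rewrite <- vscalDl. replace (1 + -1) with 0 by ring. now rewrite vscal0.
Qed.

Lemma vsub_scal (X : RBanach) (x y : X) : vsub x y = vadd x (vscal (-1) y).
Proof. unfold vsub; now rewrite vopp_scal. Qed.

Lemma Rabs_m1 : Rabs (-1) = 1.
Proof. unfold Rabs; destruct Rcase_abs; lra. Qed.

Lemma vnorm_opp (X : RBanach) (x : X) : vnorm (vopp x) = vnorm x.
Proof. rewrite vopp_scal, vnormZ, Rabs_m1. ring. Qed.

Lemma vnorm_sub_sym (X : RBanach) (x y : X) : vnorm (vsub x y) = vnorm (vsub y x).
Proof.
  assert (E : vsub x y = vscal (-1) (vsub y x)).
  { rewrite !vsub_scal, vscalDr, vscalA. replace (-1 * -1) with 1 by ring.
    now rewrite vscal1, vaddC. }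
  rewrite E, vnormZ, Rabs_m1. ring.
Qed.

Lemma vsub_chain (X : RBanach) (x y z : X) : vadd (vsub x y) (vsub y z) = vsub x z.
Proof.
  unfold vsub. rewrite <- vaddA. f_equal.
  now rewrite vaddA, (vaddC _ (vopp y) y), vaddN, vadd0l.
Qed.

Lemma vnorm_tri_sub (X : RBanach) (x y z : X) :
  vnorm (vsub x z) <= vnorm (vsub x y) + vnorm (vsub y z).
Proof. rewrite <- (vsub_chain X x y z). apply vnorm_triangle. Qed.

Lemma vsub_self (X : RBanach) (x : X) : vsub x x = vzero.
Proof. apply vaddN. Qed.

Lemma vsub0 (X : RBanach) (x : X) : vsub x vzero = x.
Proof. unfold vsub. now rewrite vopp_scal, vscal0r, vadd0. Qed.

Lemma vsub_eq0 (X : RBanach) (x y : X) : vnorm (vsub x y) = 0 -> x = y.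
Proof.
  intros H. apply vnorm_eq0 in H.
  assert (E : vadd (vsub x y) y = vadd vzero y) by now rewrite H.
  unfold vsub in E.
  now rewrite <- vaddA, (vaddC _ (vopp y) y), vaddN, vadd0, vadd0l in E.
Qed.

Lemma vsub_addadd (X : RBanach) (a b c d : X) :
  vsub (vadd a b) (vadd c d) = vadd (vsub a c) (vsub b d).
Proof.
  rewrite !vsub_scal, vscalDr, !vaddA. f_equal.
  rewrite <- !vaddA. f_equal. apply vaddC.
Qed.

Lemma vsub_scalscal (X : RBanach) (a : R) (x y : X) :
  vsub (vscal a x) (vscal a y) = vscal a (vsub x y).
Proof. rewrite !vsub_scal, vscalDr, !vscalA. f_equal. f_equal. ring. Qed.

Lemma vsub_scal_l (X : RBanach) (t t' : R) (x : X) :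
  vsub (vscal t x) (vscal t' x) = vscal (t - t') x.
Proof. rewrite vsub_scal, vscalA, <- vscalDl. f_equal. ring. Qed.

Lemma vadd_as_sub (X : RBanach) (a b : X) : vadd a b = vsub a (vopp b).
Proof.
  unfold vsub. rewrite !vopp_scal, vscalA. replace (-1 * -1) with 1 by ring.
  now rewrite vscal1.
Qed.

Lemma vsub_solve (X : RBanach) (x a b : X) : vsub x a = b -> x = vadd b a.
Proof. intros <-. unfold vsub. now rewrite <- vaddA, (vaddC _ (vopp a)), vaddN, vadd0. Qed.

Lemma vsub_shift (X : RBanach) (x y M : X) (T t : R) :
  vsub (vsub x (vscal T y)) M = vadd (vsub x (vadd M (vscal t y))) (vscal (t - T) y).
Proof.
  unfold vsub. rewrite !vopp_scal, !vscalDr, !vscalA.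
  rewrite (vaddA _ x (vscal (-1) M)), <- (vaddA _ (vadd x (vscal (-1) M))), <- vscalDl.
  rewrite <- (vaddA _ x), (vaddC _ (vscal (-1 * T) y)), vaddA. do 2 f_equal. ring.
Qed.

Lemma lin_sub (X : RBanach) (g : X -> R) (x y : X) : is_linear g -> g (vsub x y) = g x - g y.
Proof. intros [Ha Hs]. unfold vsub. rewrite Ha, vopp_scal, Hs. ring. Qed.

Lemma Rabs_le_both (a b : R) : a <= b -> - a <= b -> Rabs a <= b.
Proof. intros; unfold Rabs; destruct Rcase_abs; lra. Qed.

Lemma small_zero (a K : R) : 0 <= K -> (forall eps, 0 < eps -> Rabs a <= K * eps) -> a = 0.
Proof.
  intros HK H. destruct (Req_dec a 0) as [|Ha]; auto. exfalso.
  assert (Hp : 0 < Rabs a) by now apply Rabs_pos_lt.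
  specialize (H (Rabs a / (2 * (K + 1))) ltac:(apply Rdiv_lt_0_compat; lra)).
  assert (K * (Rabs a / (2 * (K + 1))) <= Rabs a / 2).
  { apply (Rmult_le_reg_r (2 * (K + 1))); [lra|].
    replace (K * (Rabs a / (2 * (K + 1))) * (2 * (K + 1))) with (K * Rabs a) by (field; lra).
    nra. }
  lra.
Qed.

Lemma frac_le (a b : R) : 0 < a -> 0 <= b -> a / (2 * (b + 1)) * b <= a / 2.
Proof.
  intros. replace (a / (2 * (b + 1)) * b) with (a / 2 - a / (2 * (b + 1))) by (field; lra).
  assert (0 < a / (2 * (b + 1))) by (apply Rdiv_lt_0_compat; lra). lra.
Qed.

Lemma inv_small (eps : R) : 0 < eps -> exists N, forall k, (N <= k)%nat -> / (INR k + 1) < eps.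
Proof.
  intros H. destruct (archimed_cor1 eps H) as [N [H1 H2]]. exists N. intros k Hk.
  apply Rle_lt_trans with (/ INR N); auto. apply Rinv_le_contravar.
  - now apply lt_0_INR.
  - apply le_INR in Hk. lra.
Qed.

Lemma rat_approx (a eps : R) : 0 < eps -> exists (p : Z) (n : nat), Rabs (a - IZR p / INR (S n)) < eps.
Proof.
  intros H. destruct (inv_small eps H) as [N HN]. specialize (HN N (le_n _)).
  set (M := INR (S N)). assert (HM : M = INR N + 1) by (unfold M; now rewrite S_INR).
  assert (M > 0) by (rewrite HM; pose proof (pos_INR N); lra).
  exists (Int_part (a * M)), N. destruct (base_Int_part (a * M)) as [B1 B2].
  fold M. rewrite <- HM in HN.
  assert (E : a - IZR (Int_part (a * M)) / M = (a * M - IZR (Int_part (a * M))) * / M) by (field; lra).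
  rewrite E, Rabs_mult, (Rabs_right (/ M)) by (left; apply Rinv_0_lt_compat; lra).
  rewrite Rabs_right by lra. apply Rle_lt_trans with (1 * / M); [|lra].
  apply Rmult_le_compat_r; [left; apply Rinv_0_lt_compat|]; lra.
Qed.

(** * Well-founded recursion and cardinal comparison *)

Lemma Fix_unfold {A : Type} {wlt : A -> A -> Prop} (Hwf : well_founded wlt) (P : A -> Type)
  (F : forall x, (forall y, wlt y x -> P y) -> P x) (x : A) :
  Fix Hwf P F x = F x (fun y _ => Fix Hwf P F y).
Proof.
  apply Fix_eq. intros z f g Hfg. replace g with f; [reflexivity|].
  apply functional_extensionality_dep; intros y; apply functional_extensionality_dep; auto.
Qed.

Record well_order {I : Type} (lt : I -> I -> Prop) : Prop := {
  wo_trans : forall a b c, lt a b -> lt b c -> lt a c;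
  wo_total : forall a b, lt a b \/ a = b \/ lt b a;
  wo_wf : well_founded lt }.

Definition seg {I : Type} (lt : I -> I -> Prop) (b : I) : Type := sub I (fun j => lt j b).
Definition segle {I : Type} (lt : I -> I -> Prop) (b : I) : Type := sub I (fun j => lt j b \/ j = b).

Definition fin (n : nat) : Type := seg Peano.lt n.

Lemma initial_ordinal_wo (I : Type) (lt : I -> I -> Prop) : initial_ordinal I lt -> well_order lt.
Proof. intros (_ & Htr & Htri & Hwf & _). now constructor. Qed.

Lemma nat_wo : well_order Peano.lt.
Proof. constructor; [intros; lia|intros a b; lia|exact lt_wf]. Qed.

Lemma least_el (I : Type) (lt : I -> I -> Prop) (S : I -> Prop) :
  well_founded lt -> (exists y, S y) -> exists m, S m /\ forall y, S y -> ~ lt y m.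
Proof.
  intros Hwf [y Hy]. apply NNPP. intros Hn. revert Hy.
  induction y as [y IH] using (well_founded_induction Hwf). intros Hy.
  apply Hn. exists y. split; auto. intros z Hz Hzy. exact (IH z Hzy Hz).
Qed.

Lemma list_max (I : Type) (lt : I -> I -> Prop) : well_order lt ->
  forall ks : list I, ks <> nil -> exists m, In m ks /\ forall k, In k ks -> lt k m \/ k = m.
Proof.
  intros [Htr Htri _] ks. induction ks as [|a ks IH]; intros Hne; [congruence|].
  destruct ks as [|b ks'].
  - exists a. split; [now left|]. intros k [Hk|[]]; subst; auto.
  - destruct IH as [m [Hm1 Hm2]]; [congruence|].
    destruct (Htri a m) as [H|[H|H]].
    + exists m. split; [now right|]. intros k [<-|Hk]; auto.
    + subst. exists m. split; [now left|]. intros k [<-|Hk]; auto.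
    + exists a. split; [now left|]. intros k [<-|Hk]; auto.
      destruct (Hm2 k Hk) as [H'| ->]; eauto.
Qed.

Lemma cl_refl (A : Type) : card_le A A.
Proof. now exists (fun a => a). Qed.

Lemma cl_trans (A B C : Type) : card_le A B -> card_le B C -> card_le A C.
Proof. intros [f Hf] [g Hg]. exists (fun a => g (f a)); auto. Qed.

Lemma cl_prod (A A' B B' : Type) : card_le A A' -> card_le B B' -> card_le (A * B) (A' * B').
Proof.
  intros [f Hf] [g Hg]. exists (fun p => (f (fst p), g (snd p))).
  intros [a b] [a' b'] H. inversion H. f_equal; auto.
Qed.

Lemma cl_option (A B : Type) : card_le A B -> card_le (option A) (option B).
Proof.
  intros [f Hf]. exists (option_map f).
  intros [a|] [b|] H; inversion H; auto. f_equal; auto.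
Qed.

Lemma cl_list (A B : Type) : card_le A B -> card_le (list A) (list B).
Proof.
  intros [f Hf]. exists (map f).
  intros l; induction l as [|a l IH]; intros [|b l'] H; inversion H; auto. f_equal; auto.
Qed.

Lemma sub_eq (T : Type) (P : T -> Prop) (a b : sub T P) : proj1_sig a = proj1_sig b -> a = b.
Proof. destruct a, b; simpl; intros ->. f_equal. apply proof_irrelevance. Qed.

Lemma cl_sub (T : Type) (P Q : T -> Prop) : (forall x, P x -> Q x) -> card_le (sub T P) (sub T Q).
Proof.
  intros H. exists (fun a => exist _ (proj1_sig a) (H _ (proj2_sig a))).
  intros a b E. apply sub_eq. exact (f_equal (@proj1_sig _ _) E).
Qed.

Lemma cl_sub_full (T : Type) (P : T -> Prop) : card_le (sub T P) T.
Proof. exists (@proj1_sig _ _). apply sub_eq. Qed.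

Lemma cl_full_sub (T : Type) (P : T -> Prop) : (forall x, P x) -> card_le T (sub T P).
Proof.
  intros H. exists (fun a => exist _ a (H a)).
  intros a b E. exact (f_equal (@proj1_sig _ _) E).
Qed.

Lemma card_le_rel (A B : Type) (Rel : A -> B -> Prop) :
  (forall a, exists b, Rel a b) -> (forall a a' b, Rel a b -> Rel a' b -> a = a') -> card_le A B.
Proof.
  intros Htot Hinj. exists (fun a => proj1_sig (constructive_indefinite_description _ (Htot a))).
  intros a a' E.
  destruct (constructive_indefinite_description _ (Htot a)) as [b Hb],
           (constructive_indefinite_description _ (Htot a')) as [b' Hb'].
  simpl in E. subst. eauto.
Qed.

(** Transfinite injection: if [A] is never covered by the values taken below any
    stage of a well-founded trichotomous order on [W], then choosing at every
    stage a value not taken before injects [W] into [A]. *)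
Lemma wf_injection (W A : Type) (wlt : W -> W -> Prop) :
  well_founded wlt -> (forall w w', wlt w w' \/ w = w' \/ wlt w' w) ->
  (forall w, ~ card_le A (sub W (fun w' => wlt w' w))) -> card_le W A.
Proof.
  intros Hwf Htri Hsmall.
  destruct (classic (inhabited A)) as [[a0]|HA].
  2:{ destruct (classic (inhabited W)) as [[w]|HW].
      - exfalso. apply (Hsmall w). exists (fun a => False_rect _ (HA (inhabits a))).
        intros a. exfalso. exact (HA (inhabits a)).
      - exists (fun w => False_rect _ (HW (inhabits w))). intros w. exfalso. exact (HW (inhabits w)). }
  set (F := fun w (rec : forall w', wlt w' w -> A) =>
              epsilon (inhabits a0) (fun a => forall w' (H : wlt w' w), rec w' H <> a)).
  set (phi := Fix Hwf (fun _ => A) F).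
  assert (Hfresh : forall w w', wlt w' w -> phi w' <> phi w).
  { intros w. unfold phi at 2. rewrite Fix_unfold. fold phi. unfold F at 1.
    apply (epsilon_spec (inhabits a0) (fun a => forall w' (H : wlt w' w), phi w' <> a)).
    apply NNPP. intros Hno. apply (Hsmall w).
    apply (card_le_rel _ _ (fun a (s : sub W (fun w' => wlt w' w)) => phi (proj1_sig s) = a)).
    - intros a. apply NNPP. intros Hk. apply Hno. exists a. intros w' H E.
      apply Hk. now exists (exist _ w' H).
    - intros a a' s <- <-. reflexivity. }
  exists phi. intros w w' E. destruct (Htri w w') as [H|[H|H]]; auto.
  - exfalso. exact (Hfresh w' w H E).
  - exfalso. exact (Hfresh w w' H (eq_sym E)).
Qed.

Lemma pigeon_fun (n : nat) (f : nat -> nat) :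
  (forall i, (f i < n)%nat) -> (forall i j, f i = f j -> i = j) -> False.
Proof.
  revert f. induction n as [|n IH]; intros f Hf Hi; [specialize (Hf 0%nat); lia|].
  destruct (classic (exists i0, f i0 = n)) as [[i0 Hi0]|Hn].
  - apply (IH (fun i => f (if lt_dec i i0 then i else S i))).
    + intros i. assert (f (if lt_dec i i0 then i else S i) <> n).
      { intros E. rewrite <- Hi0 in E. apply Hi in E. destruct (lt_dec i i0); lia. }
      specialize (Hf (if lt_dec i i0 then i else S i)). lia.
    + intros i j E. apply Hi in E. destruct (lt_dec i i0), (lt_dec j i0); lia.
  - apply (IH f); auto. intros i. specialize (Hf i).
    assert (f i <> n) by (intro; apply Hn; eauto). lia.
Qed.

Lemma pigeon (n : nat) : ~ card_le nat (fin n).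
Proof.
  intros [f Hf]. apply (pigeon_fun n (fun i => proj1_sig (f i))).
  - intros i. exact (proj2_sig (f i)).
  - intros i j E. apply Hf, sub_eq, E.
Qed.

Lemma finite_or_infinite (A : Type) : card_le nat A \/ exists n, card_le A (fin n).
Proof.
  destruct (classic (exists n, card_le A (fin n))) as [|Hn]; [now right|left].
  destruct nat_wo as [_ Htri Hwf].
  apply (wf_injection nat A Peano.lt Hwf Htri). intros n Hc. apply Hn. now exists n.
Qed.

Lemma fin_list (A : Type) (n : nat) : card_le A (fin n) -> exists l : list A, forall a, In a l.
Proof.
  intros [f Hf].
  assert (K : forall m, exists l, forall a, (proj1_sig (f a) < m)%nat -> In a l).
  { induction m as [|m [l Hl]].
    - exists nil. intros; lia.
    - destruct (classic (exists a0, proj1_sig (f a0) = m)) as [[a0 Ha0]|Hn].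
      + exists (a0 :: l). intros a Ha. destruct (Nat.eq_dec (proj1_sig (f a)) m) as [E|E].
        * left. apply Hf, sub_eq. congruence.
        * right. apply Hl. lia.
      + exists l. intros a Ha. apply Hl.
        destruct (Nat.eq_dec (proj1_sig (f a)) m) as [E|E]; [exfalso; eauto|lia]. }
  destruct (K n) as [l Hl]. exists l. intros a. apply Hl. exact (proj2_sig (f a)).
Qed.

Lemma fin_prod (A B : Type) (n m : nat) :
  card_le A (fin n) -> card_le B (fin m) -> card_le (A * B) (fin (n * m)).
Proof.
  intros [f Hf] [g Hg].
  assert (Hb : forall p : A * B, (proj1_sig (f (fst p)) * m + proj1_sig (g (snd p)) < n * m)%nat).
  { intros [a b]. simpl. destruct (f a) as [x Hx], (g b) as [y Hy]. simpl. unfold Peano.lt in *. nia. }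
  exists (fun p => exist (fun k => (k < n * m)%nat) _ (Hb p)).
  intros [a b] [a' b'] E. apply (f_equal (@proj1_sig _ _)) in E. simpl in E.
  pose proof (proj2_sig (g b)) as Hgb. pose proof (proj2_sig (g b')) as Hgb'.
  simpl in Hgb, Hgb'.
  assert (E1 : proj1_sig (f a) = proj1_sig (f a')) by nia.
  assert (E2 : proj1_sig (g b) = proj1_sig (g b')) by nia.
  f_equal; [apply Hf|apply Hg]; now apply sub_eq.
Qed.

Lemma fin_option (A : Type) (n : nat) : card_le A (fin n) -> card_le (option A) (fin (S n)).
Proof.
  intros [f Hf].
  assert (Hb : forall o : option A, ((match o with None => n | Some a => proj1_sig (f a) end) < S n)%nat).
  { intros [a|]; [pose proof (proj2_sig (f a)); simpl in *; unfold Peano.lt in *; lia|lia]. }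
  exists (fun o => exist (fun k => (k < S n)%nat) _ (Hb o)).
  intros [a|] [b|] E; apply (f_equal (@proj1_sig _ _)) in E; simpl in E; auto.
  - f_equal. now apply Hf, sub_eq.
  - pose proof (proj2_sig (f a)); simpl in *; lia.
  - pose proof (proj2_sig (f b)); simpl in *; lia.
Qed.

(** An infinite type absorbs one extra point (Hilbert's hotel). *)
Lemma inf_option (A : Type) : card_le nat A -> card_le (option A) A.
Proof.
  intros [h Hh].
  apply (card_le_rel _ _ (fun o a => match o with
     | None => a = h 0%nat
     | Some b => (exists k, h k = b /\ a = h (S k)) \/ ((~ exists k, h k = b) /\ a = b) end)).
  - intros [b|]; [|eauto]. destruct (classic (exists k, h k = b)) as [[k Hk]|Hn]; eauto.
  - intros [b|] [b'|] a H H'; auto.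
    + destruct H as [[k [<- ->]]|[Hn ->]], H' as [[k' [<- E]]|[Hn' <-]].
      * apply Hh in E. injection E as ->. reflexivity.
      * exfalso. apply Hn'. eauto.
      * exfalso. apply Hn. eauto.
      * reflexivity.
    + destruct H as [[k [_ ->]]|[Hn ->]]; subst.
      * apply Hh in H'. discriminate.
      * exfalso. apply Hn. eauto.
    + destruct H' as [[k [_ ->]]|[Hn ->]]; subst.
      * apply Hh in H. discriminate.
      * exfalso. apply Hn. eauto.
Qed.

Lemma Z_nat2 : card_le Z (nat * nat).
Proof. exists (fun z => (Z.to_nat z, Z.to_nat (- z))). intros z z' E. inversion E. lia. Qed.

Lemma list_code (A : Type) : card_le nat A -> card_le (A * A) A -> card_le (list A) A.
Proof.
  intros [h Hh] [p Hp].
  set (code := fix code (l : list A) : A :=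
                 match l with nil => h 0%nat | a :: l' => p (a, code l') end).
  exists (fun l => p (h (length l), code l)).
  intros l l' E. apply Hp in E. injection E as E1 E2. apply Hh in E1.
  revert l' E1 E2. induction l as [|a l IH]; intros [|a' l'] E1 E2; simpl in *; try discriminate; auto.
  apply Hp in E2. injection E2 as -> E2. f_equal. auto.
Qed.

(** ** Hessenberg's theorem: [|α × α| = |α|] for infinite initial segments *)

Lemma segle_option (I : Type) (lt : I -> I -> Prop) (m : I) :
  card_le (segle lt m) (option (seg lt m)).
Proof.
  exists (fun x => match excluded_middle_informative (lt (proj1_sig x) m) with
                   | left H => Some (exist _ (proj1_sig x) H) | right _ => None end).
  intros [x Hx] [y Hy]; simpl.
  destruct (excluded_middle_informative (lt x m)) as [A|A],
           (excluded_middle_informative (lt y m)) as [B|B]; intros E; try discriminate.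
  - injection E as ->. now apply sub_eq.
  - apply sub_eq; simpl. destruct Hx, Hy; try contradiction. congruence.
Qed.

Lemma segle_inf (I : Type) (lt : I -> I -> Prop) (m : I) :
  card_le nat (seg lt m) -> card_le (segle lt m) (seg lt m).
Proof. intros H. eapply cl_trans; [apply segle_option|]. now apply inf_option. Qed.

Definition lex2 {A B : Type} (ra : A -> A -> Prop) (rb : B -> B -> Prop) (p q : A * B) : Prop :=
  ra (fst p) (fst q) \/ (fst p = fst q /\ rb (snd p) (snd q)).

Lemma wf_lex2 (A B : Type) (ra : A -> A -> Prop) (rb : B -> B -> Prop) :
  well_founded ra -> well_founded rb -> well_founded (lex2 ra rb).
Proof.
  intros Ha Hb [a b]. revert b. induction a as [a IHa] using (well_founded_induction_type Ha).
  intros b. induction b as [b IHb] using (well_founded_induction_type Hb).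
  constructor. intros [a' b'] [H|[E H]]; simpl in *; [now apply IHa|subst; now apply IHb].
Qed.

Lemma tri_lex2 (A B : Type) (ra : A -> A -> Prop) (rb : B -> B -> Prop) :
  (forall a b, ra a b \/ a = b \/ ra b a) -> (forall a b, rb a b \/ a = b \/ rb b a) ->
  forall p q, lex2 ra rb p q \/ p = q \/ lex2 ra rb q p.
Proof.
  intros Ha Hb [a b] [a' b']. unfold lex2; simpl.
  destruct (Ha a a') as [H|[H|H]]; auto. subst.
  destruct (Hb b b') as [H|[H|H]]; subst; auto.
Qed.

Definition omax {I : Type} (lt : I -> I -> Prop) (a b : I) : I :=
  if excluded_middle_informative (lt a b) then b else a.

(** Hessenberg's well-order on pairs: first by maximum, then lexicographically. *)
Definition pair_lt {I : Type} (lt : I -> I -> Prop) (p q : I * I) : Prop :=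
  lex2 lt (lex2 lt lt) (omax lt (fst p) (snd p), p) (omax lt (fst q) (snd q), q).

Section PairOrder.
Variables (I : Type) (lt : I -> I -> Prop).
Hypothesis Hwo : well_order lt.

Lemma omax_ge (a b : I) :
  (lt a (omax lt a b) \/ a = omax lt a b) /\ (lt b (omax lt a b) \/ b = omax lt a b).
Proof.
  unfold omax. destruct (excluded_middle_informative (lt a b)); auto.
  split; auto. destruct (wo_total _ Hwo a b) as [H|[H|H]]; subst; auto. contradiction.
Qed.

Lemma omax_cases (a b : I) : omax lt a b = a \/ omax lt a b = b.
Proof. unfold omax. destruct (excluded_middle_informative (lt a b)); auto. Qed.

Lemma pair_lt_wf : well_founded (pair_lt lt).
Proof.
  apply (wf_inverse_image _ _ _ (fun p => (omax lt (fst p) (snd p), p))).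
  destruct Hwo as [_ _ Hwf]. apply wf_lex2; [|apply wf_lex2]; auto.
Qed.

Lemma pair_lt_total (p q : I * I) : pair_lt lt p q \/ p = q \/ pair_lt lt q p.
Proof.
  destruct Hwo as [_ Htri _]. unfold pair_lt.
  destruct (tri_lex2 _ _ _ _ Htri (tri_lex2 _ _ _ _ Htri Htri)
              (omax lt (fst p) (snd p), p) (omax lt (fst q) (snd q), q)) as [H|[H|H]]; auto.
  injection H; auto.
Qed.

Lemma pair_lt_below (p q : I * I) : pair_lt lt p q ->
  (lt (fst p) (omax lt (fst q) (snd q)) \/ fst p = omax lt (fst q) (snd q)) /\
  (lt (snd p) (omax lt (fst q) (snd q)) \/ snd p = omax lt (fst q) (snd q)).
Proof.
  intros H. destruct Hwo as [Htr _ _].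
  assert (K : lt (omax lt (fst p) (snd p)) (omax lt (fst q) (snd q)) \/
              omax lt (fst p) (snd p) = omax lt (fst q) (snd q)) by (destruct H as [H|[H _]]; auto).
  destruct (omax_ge (fst p) (snd p)) as [H1 H2].
  assert (lel : forall a b c, (lt a b \/ a = b) -> (lt b c \/ b = c) -> lt a c \/ a = c)
    by (intros a b c [? | ->] [? | ->]; eauto).
  split; eapply lel; eauto.
Qed.

(** The inductive step of Hessenberg's theorem for an initial piece [P] of [I]:
    below a pair [w] there are at most [|segle m|^2] pairs, [m = omax w], which is
    smaller than [|P|] (by induction when [seg m] is infinite, trivially otherwise);
    so pairs can be injected into [P] along [pair_lt]. *)
Lemma hessenberg_step (P : I -> Prop) :
  card_le nat (sub I P) ->
  (forall m, P m -> ~ card_le (sub I P) (seg lt m)) ->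
  (forall m, P m -> card_le nat (seg lt m) -> card_le (seg lt m * seg lt m) (seg lt m)) ->
  card_le (sub I P * sub I P) (sub I P).
Proof.
  intros Hinf Hini IH.
  set (pr := fun w : sub I P * sub I P => (proj1_sig (fst w), proj1_sig (snd w))).
  apply (wf_injection _ _ (fun w w' => pair_lt lt (pr w) (pr w'))).
  { apply wf_inverse_image, pair_lt_wf. }
  { intros w w'. destruct (pair_lt_total (pr w) (pr w')) as [H|[H|H]]; auto.
    right; left. destruct w as [a b], w' as [a' b']. unfold pr in H; simpl in H.
    injection H as E1 E2. f_equal; now apply sub_eq. }
  intros w Hc.
  set (m := omax lt (fst (pr w)) (snd (pr w))).
  assert (Pm : P m) by (unfold m; destruct (omax_cases (fst (pr w)) (snd (pr w))) as [-> | ->]; unfold pr; simpl; apply proj2_sig).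
  assert (Hbelow : card_le (sub (sub I P * sub I P) (fun w' => pair_lt lt (pr w') (pr w)))
                           (segle lt m * segle lt m)).
  { exists (fun w' =>
      (exist (fun j => lt j m \/ j = m) _ (proj1 (pair_lt_below (pr (proj1_sig w')) (pr w) (proj2_sig w'))),
       exist (fun j => lt j m \/ j = m) _ (proj2 (pair_lt_below (pr (proj1_sig w')) (pr w) (proj2_sig w'))))).
    intros [[a b] Hab] [[a' b'] Hab'] E. injection E as E1 E2.
    apply sub_eq. simpl. f_equal; now apply sub_eq. }
  pose proof (cl_trans _ _ _ Hc Hbelow) as C1.
  destruct (finite_or_infinite (seg lt m)) as [Hi|[n Hn]].
  - apply (Hini m Pm). eapply cl_trans; [exact C1|].
    eapply cl_trans; [apply cl_prod; now apply segle_inf|]. now apply IH.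
  - apply (pigeon (S n * S n)). eapply cl_trans; [exact Hinf|]. eapply cl_trans; [exact C1|].
    apply fin_prod; (eapply cl_trans; [apply segle_option|now apply fin_option]).
Qed.

Lemma hessenberg_seg (b : I) :
  card_le nat (seg lt b) -> card_le (seg lt b * seg lt b) (seg lt b).
Proof.
  induction b as [b IHb] using (well_founded_induction (wo_wf _ Hwo)). intros Hinf.
  destruct (classic (exists d, lt d b /\ card_le (seg lt b) (seg lt d))) as [[d [Hd Hc]]|Hn].
  - assert (Hsub : card_le (seg lt d) (seg lt b)) by (apply cl_sub; intros; eapply (wo_trans _ Hwo); eauto).
    eapply cl_trans; [apply cl_prod; exact Hc|].
    eapply cl_trans; [apply IHb; eauto using cl_trans|exact Hsub].
  - apply (hessenberg_step (fun j => lt j b)); auto.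
    intros m Hm Hc. apply Hn. eauto.
Qed.

End PairOrder.

Lemma hessenberg_initial (I : Type) (lt : I -> I -> Prop) :
  initial_ordinal I lt -> card_le nat I -> card_le (I * I) I.
Proof.
  intros Hio Hinf. pose proof (initial_ordinal_wo _ _ Hio) as Hwo.
  destruct Hio as (_ & _ & _ & _ & Hini).
  assert (K : card_le (sub I (fun _ => True) * sub I (fun _ => True)) (sub I (fun _ => True))).
  { apply (hessenberg_step I lt Hwo (fun _ => True)).
    - eapply cl_trans; [exact Hinf|apply cl_full_sub; intros; exact Logic.I].
    - intros m _ Hc. apply (Hini m). eapply cl_trans; [apply cl_full_sub; intros; exact Logic.I|exact Hc].
    - intros m _. now apply hessenberg_seg. }
  eapply cl_trans; [apply cl_prod; apply cl_full_sub; intros; exact Logic.I|].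
  eapply cl_trans; [exact K|apply cl_sub_full].
Qed.

Lemma not_onto_small (I : Type) (Q : I -> Prop) (f : I -> I) :
  ~ card_le I (sub I Q) -> ~ forall y, exists x, Q x /\ f x = y.
Proof.
  intros HnI Hf. apply HnI. apply (card_le_rel _ _ (fun y (s : sub I Q) => f (proj1_sig s) = y)).
  - intros y. destruct (Hf y) as [x [Qx E]]. now exists (exist _ x Qx).
  - intros y y' s <- <-. reflexivity.
Qed.

(** The rank of [x] is the
    least value not taken by the ranks of smaller points of [Q]. *)
Lemma rank_function (I : Type) (lt : I -> I -> Prop) (Q : I -> Prop) :
  well_order lt -> ~ card_le I (sub I Q) ->
  exists r : I -> I, (forall x x', Q x -> Q x' -> r x = r x' -> x = x') /\
                     (forall x z, lt z (r x) -> exists x', Q x' /\ r x' = z).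
Proof.
  intros [Htr Htri Hwf] HnI.
  assert (inh : inhabited I).
  { apply NNPP; intro Hn; apply HnI. exists (fun i => False_rect _ (Hn (inhabits i))).
    intros a. exfalso. exact (Hn (inhabits a)). }
  set (taken := fun x (rec : forall x', lt x' x -> I) y => exists x' (H : lt x' x), Q x' /\ rec x' H = y).
  set (F := fun x rec => epsilon inh (fun y => ~ taken x rec y /\ forall z, lt z y -> taken x rec z)).
  set (r := Fix Hwf (fun _ => I) F).
  assert (Hspec : forall x, ~ taken x (fun x' _ => r x') (r x) /\
                            forall z, lt z (r x) -> taken x (fun x' _ => r x') z).
  { intros x. unfold r at 2 3. rewrite Fix_unfold. fold r. unfold F at 1.
    apply (epsilon_spec inh (fun y => ~ taken x (fun x' _ => r x') y /\
                                      forall z, lt z y -> taken x (fun x' _ => r x') z)).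
    destruct (least_el I lt (fun y => ~ taken x (fun x' _ => r x') y) Hwf) as [m [Hm1 Hm2]].
    - apply NNPP. intros Hno. apply (not_onto_small I Q r HnI). intros y.
      apply NNPP. intros Hk. apply Hno. exists y. intros [x' [H [A B]]]. apply Hk; eauto.
    - exists m. split; auto. intros z Hz. apply NNPP. intros Hn. exact (Hm2 z Hn Hz). }
  exists r. split.
  - intros x x' Hx Hx' E. destruct (Htri x x') as [H|[H|H]]; auto; exfalso.
    + apply (proj1 (Hspec x')). now exists x, H.
    + apply (proj1 (Hspec x)). now exists x', H.
  - intros x z Hz. destruct (proj2 (Hspec x) z Hz) as [x' [_ [Qx' E]]]. now exists x'.
Qed.

(** Collapse: a subset [Q] smaller than [I] has the cardinality of an initial
    segment (its order type), namely the set of its ranks. *)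
Lemma collapse (I : Type) (lt : I -> I -> Prop) (Q : I -> Prop) :
  well_order lt -> ~ card_le I (sub I Q) ->
  exists g, card_le (sub I Q) (seg lt g) /\ card_le (seg lt g) (sub I Q).
Proof.
  intros Hwo HnI. destruct (rank_function I lt Q Hwo HnI) as [r [Hinj Hdown]].
  set (Im := fun y => exists x, Q x /\ r x = y).
  destruct (least_el I lt (fun y => ~ Im y) (wo_wf _ Hwo)) as [g [Hg1 Hg2]].
  { apply NNPP. intros Hno. apply (not_onto_small I Q r HnI). intros y.
    now apply NNPP; intros Hk; apply Hno; exists y. }
  assert (Hlt : forall y, Im y -> lt y g).
  { intros y Hy. destruct (wo_total _ Hwo y g) as [H|[H|H]]; auto; exfalso; [subst; auto|].
    destruct Hy as [x [Qx <-]]. apply Hg1, (Hdown x g H). }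
  exists g. split.
  - exists (fun x => exist (fun j => lt j g) (r (proj1_sig x)) (Hlt _ (ex_intro _ _ (conj (proj2_sig x) eq_refl)))).
    intros x x' E. apply (f_equal (@proj1_sig _ _)) in E. apply sub_eq. apply Hinj; auto; apply proj2_sig.
  - apply (card_le_rel _ _ (fun (y : seg lt g) (x : sub I Q) => r (proj1_sig x) = proj1_sig y)).
    + intros [y Hy]. simpl. destruct (classic (Im y)) as [[x [Qx E]]|Hn]; [now exists (exist _ x Qx)|].
      exfalso. exact (Hg2 y Hn Hy).
    + intros y y' x E E'. apply sub_eq. congruence.
Qed.

(** Hessenberg's theorem for an infinite cardinal [|J| < |I|]: [J] is equinumerous
    with an initial segment of [I] by [collapse]. *)
Lemma hessenberg_small (I : Type) (lt : I -> I -> Prop) (J : Type) :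
  well_order lt -> card_le J I -> ~ card_le I J -> card_le nat J -> card_le (J * J) J.
Proof.
  intros Hwo [e He] HnI Hinf.
  set (Q := fun i => exists j, e j = i).
  assert (C1 : card_le J (sub I Q)).
  { exists (fun j => exist Q (e j) (ex_intro _ j eq_refl)).
    intros a b E. apply (f_equal (@proj1_sig _ _)) in E. auto. }
  assert (C2 : card_le (sub I Q) J).
  { apply (card_le_rel _ _ (fun i j => e j = proj1_sig i)).
    - intros [i [j E]]. now exists j.
    - intros i i' j E E'. apply sub_eq. exact (eq_trans (eq_sym E) E'). }
  destruct (collapse I lt Q Hwo) as [g [G1 G2]]; [eauto using cl_trans|].
  eapply cl_trans; [apply cl_prod; apply (cl_trans _ _ _ C1 G1)|].
  eapply cl_trans; [apply (hessenberg_seg I lt Hwo)|]; eauto using cl_trans.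
Qed.

(** * Hahn–Banach by transfinite extension *)

(** A prescription [G w r] asks for a functional with value [r] at [w]. It is
    consistent with norm bound [C] when every finite formal combination
    [Σ t_k (w_k, r_k)] of prescribed pairs satisfies [|Σ t_k r_k| <= C ‖Σ t_k w_k‖].
    Combinations are lists of triples [(t_k, (w_k, r_k))]. *)
Fixpoint cvec {X : RBanach} (l : list (R * (X * R))) : X :=
  match l with nil => vzero | p :: l' => vadd (vscal (fst p) (fst (snd p))) (cvec l') end.

Fixpoint cval {X : RBanach} (l : list (R * (X * R))) : R :=
  match l with nil => 0 | p :: l' => fst p * snd (snd p) + cval l' end.

Definition over {X : RBanach} (G : X -> R -> Prop) (l : list (R * (X * R))) : Prop :=
  Forall (fun p => G (fst (snd p)) (snd (snd p))) l.

Definition bounded_by {X : RBanach} (G : X -> R -> Prop) (C : R) : Prop :=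
  forall l, over G l -> Rabs (cval l) <= C * vnorm (cvec l).

Definition cscale {X : RBanach} (a : R) (l : list (R * (X * R))) : list (R * (X * R)) :=
  map (fun p => (a * fst p, snd p)) l.

Section Combinations.
Variable X : RBanach.
Implicit Types (l : list (R * (X * R))) (G : X -> R -> Prop).

Lemma cvec_app l1 l2 : cvec (l1 ++ l2) = vadd (cvec l1) (cvec l2).
Proof. induction l1 as [|p l1 IH]; simpl; [now rewrite vadd0l|now rewrite IH, vaddA]. Qed.

Lemma cval_app l1 l2 : cval (l1 ++ l2) = cval l1 + cval l2.
Proof. induction l1 as [|p l1 IH]; simpl; [ring|rewrite IH; ring]. Qed.

Lemma cvec_scale a l : cvec (cscale a l) = vscal a (cvec l).
Proof. induction l as [|p l IH]; simpl; [now rewrite vscal0r|now rewrite IH, vscalDr, vscalA]. Qed.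

Lemma cval_scale a l : cval (cscale a l) = a * cval l.
Proof. induction l as [|p l IH]; simpl; [ring|rewrite IH; ring]. Qed.

Lemma over_app G l1 l2 : over G l1 -> over G l2 -> over G (l1 ++ l2).
Proof. intros; now apply Forall_app. Qed.

Lemma over_scale G a l : over G l -> over G (cscale a l).
Proof. intros H. apply Forall_map. eapply Forall_impl; [|exact H]. now simpl. Qed.

Lemma over_mono (G G' : X -> R -> Prop) l : (forall w r, G w r -> G' w r) -> over G l -> over G' l.
Proof. intros H H1. eapply Forall_impl; [|exact H1]. intros; now apply H. Qed.

Lemma bounded_diff G C l1 l2 : bounded_by G C -> over G l1 -> over G l2 ->
  Rabs (cval l2 - cval l1) <= C * vnorm (vsub (cvec l2) (cvec l1)).
Proof.
  intros HG H1 H2. pose proof (HG _ (over_app _ _ _ H2 (over_scale _ (-1) _ H1))) as K.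
  rewrite cval_app, cvec_app, cval_scale, cvec_scale, <- vsub_scal in K.
  now replace (cval l2 - cval l1) with (cval l2 + -1 * cval l1) by ring.
Qed.

Lemma over_split G y c l :
  over (fun w r => G w r \/ (w = y /\ r = c)) l ->
  exists l' s, over G l' /\ cvec l = vadd (cvec l') (vscal s y) /\ cval l = cval l' + s * c.
Proof.
  induction l as [|p l IH]; intros H.
  - exists nil, 0. split; [constructor|]. simpl. rewrite vscal0, vadd0. split; auto; ring.
  - inversion H as [|? ? Hp Hl]; subst. destruct (IH Hl) as (l' & s & H1 & H2 & H3).
    destruct p as [t [w r]]; simpl in *. destruct Hp as [Hp | [-> ->]].
    + exists ((t, (w, r)) :: l'), s. split; [now constructor|]. simpl.
      rewrite H2, H3. split; [now rewrite vaddA|ring].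
    + exists l', (t + s). split; auto. rewrite H2, H3, vscalDl. split; [|ring].
      now rewrite vaddA, (vaddC _ (vscal t y) (cvec l')), <- vaddA.
Qed.

(** Adding the pair [(y, c)] keeps the bound [C] as soon as [c] satisfies it
    against every combination over [G] (the general case follows by scaling). *)
Lemma bounded_add_point G C y c : bounded_by G C ->
  (forall l, over G l -> Rabs (cval l + c) <= C * vnorm (vadd (cvec l) y)) ->
  bounded_by (fun w r => G w r \/ (w = y /\ r = c)) C.
Proof.
  intros HG Core l Hl. destruct (over_split G y c l Hl) as (l' & s & H1 & -> & ->).
  destruct (Req_dec s 0) as [->|Hs].
  - rewrite vscal0, vadd0. replace (cval l' + 0 * c) with (cval l') by ring. now apply HG.
  - set (l'' := cscale (/ s) l').
    assert (Eg : cval l' + s * c = s * (cval l'' + c)) by (unfold l''; rewrite cval_scale; field; auto).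
    assert (Ev : vadd (cvec l') (vscal s y) = vscal s (vadd (cvec l'') y)).
    { unfold l''. rewrite cvec_scale, vscalDr, vscalA. replace (s * / s) with 1 by (field; auto).
      now rewrite vscal1. }
    rewrite Eg, Ev, vnormZ, Rabs_mult.
    replace (C * (Rabs s * vnorm (vadd (cvec l'') y))) with (Rabs s * (C * vnorm (vadd (cvec l'') y))) by ring.
    apply Rmult_le_compat_l; [apply Rabs_pos|]. apply Core. now apply over_scale.
Qed.

(** One-point extension: a [C]-bounded prescription can be extended to any
    further point [y]; the value is a supremum of lower bounds, which all lie
    below every upper bound by [bounded_diff]. *)
Lemma extend_point G C y : 0 <= C -> bounded_by G C ->
  exists c, bounded_by (fun w r => G w r \/ (w = y /\ r = c)) C.
Proof.
  intros HC HG.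
  set (lo := fun l => - C * vnorm (vadd (cvec l) y) - cval l).
  set (hi := fun l => C * vnorm (vadd (cvec l) y) - cval l).
  assert (Hb : forall l1 l2, over G l1 -> over G l2 -> lo l1 <= hi l2).
  { intros l1 l2 H1 H2. unfold lo, hi.
    pose proof (bounded_diff G C l1 l2 HG H1 H2) as K.
    assert (K2 : vnorm (vsub (cvec l2) (cvec l1)) <= vnorm (vadd (cvec l2) y) + vnorm (vadd (cvec l1) y)).
    { rewrite (vadd_as_sub X (cvec l2) y), (vadd_as_sub X (cvec l1) y), (vnorm_sub_sym X (cvec l1)).
      apply vnorm_tri_sub. }
    pose proof (Rle_abs (cval l2 - cval l1)).
    assert (C * vnorm (vsub (cvec l2) (cvec l1)) <= C * (vnorm (vadd (cvec l2) y) + vnorm (vadd (cvec l1) y)))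
      by now apply Rmult_le_compat_l.
    lra. }
  destruct (completeness (fun z => exists l, over G l /\ z = lo l)) as [c [Hc1 Hc2]].
  - exists (hi nil). intros z [l [Hl ->]]. apply Hb; auto. constructor.
  - exists (lo nil), nil. split; auto. constructor.
  - exists c. apply bounded_add_point; auto. intros l Hl. apply Rabs_le_both.
    + assert (c <= hi l) by (apply Hc2; intros z [l1 [Hl1 ->]]; now apply Hb). unfold hi in *. lra.
    + assert (lo l <= c) by (apply Hc1; now exists l). unfold lo in *. lra.
Qed.

Lemma norm_le_via (x y : X) : vnorm y <= vnorm x + vnorm (vsub x y).
Proof.
  assert (E : y = vsub x (vsub x y)).
  { unfold vsub. rewrite !vopp_scal, vscalDr, vscalA. replace (-1 * -1) with 1 by ring.
    now rewrite vscal1, vaddA, <- vopp_scal, vaddN, vadd0l. }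
  rewrite E at 1. unfold vsub at 1. eapply Rle_trans; [apply vnorm_triangle|]. rewrite vnorm_opp. lra.
Qed.

Lemma approximate_values H C : 0 <= C -> bounded_by H C ->
  exists F : X -> R, forall x l, over H l -> Rabs (F x - cval l) <= C * vnorm (vsub x (cvec l)).
Proof.
  intros HC HB.
  set (lo := fun x l => cval l - C * vnorm (vsub x (cvec l))).
  set (Ex := fun x z => exists l, over H l /\ z = lo x l).
  assert (bnd : forall x, bound (Ex x)).
  { intros x. exists (C * vnorm x). intros z [l [Hl ->]]. unfold lo.
    pose proof (HB l Hl). pose proof (norm_le_via x (cvec l)). pose proof (Rle_abs (cval l)).
    assert (C * vnorm (cvec l) <= C * (vnorm x + vnorm (vsub x (cvec l)))) by now apply Rmult_le_compat_l.
    lra. }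
  assert (ne : forall x, exists z, Ex x z) by (intros x; exists (lo x nil), nil; split; [constructor|auto]).
  exists (fun x => proj1_sig (completeness (Ex x) (bnd x) (ne x))).
  intros x l Hl. destruct (completeness (Ex x) (bnd x) (ne x)) as [m [Hm1 Hm2]]. simpl.
  apply Rabs_le_both.
  - assert (m <= cval l + C * vnorm (vsub x (cvec l))); [|lra].
    apply Hm2. intros z [l' [Hl' ->]]. unfold lo.
    pose proof (bounded_diff H C l l' HB Hl Hl') as K.
    assert (K2 : vnorm (vsub (cvec l') (cvec l)) <= vnorm (vsub x (cvec l')) + vnorm (vsub x (cvec l))).
    { rewrite (vnorm_sub_sym X x (cvec l')). apply vnorm_tri_sub. }
    pose proof (Rle_abs (cval l' - cval l)).
    assert (C * vnorm (vsub (cvec l') (cvec l)) <= C * (vnorm (vsub x (cvec l')) + vnorm (vsub x (cvec l))))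
      by now apply Rmult_le_compat_l.
    lra.
  - assert (lo x l <= m) by (apply Hm1; now exists l). unfold lo in *. lra.
Qed.

(** A [C]-bounded prescription whose combinations are dense in [X] is realized by
    a bounded linear functional: the approximate values of [approximate_values]
    are additive and homogeneous up to arbitrarily small errors. *)
Lemma extend_dense H C : 0 <= C -> bounded_by H C ->
  (forall x eps, 0 < eps -> exists l, over H l /\ vnorm (vsub x (cvec l)) < eps) ->
  exists F : X -> R, in_dual F /\ forall w r, H w r -> F w = r.
Proof.
  intros HC HB Hd. destruct (approximate_values H C HC HB) as [F Fc].
  exists F. split; [split; [split|]|].
  - intros x y. apply Rminus_diag_uniq. apply (small_zero _ (4 * C)); [lra|].
    intros eps Heps. destruct (Hd x eps Heps) as [l1 [H1 N1]]. destruct (Hd y eps Heps) as [l2 [H2 N2]].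
    pose proof (Fc x l1 H1) as A1. pose proof (Fc y l2 H2) as A2.
    pose proof (Fc (vadd x y) (l1 ++ l2) (over_app _ _ _ H1 H2)) as A3.
    rewrite cval_app, cvec_app, vsub_addadd in A3.
    assert (vnorm (vadd (vsub x (cvec l1)) (vsub y (cvec l2))) <= 2 * eps)
      by (eapply Rle_trans; [apply vnorm_triangle|lra]).
    assert (C * vnorm (vadd (vsub x (cvec l1)) (vsub y (cvec l2))) <= C * (2 * eps)) by now apply Rmult_le_compat_l.
    assert (C * vnorm (vsub x (cvec l1)) <= C * eps) by (apply Rmult_le_compat_l; lra).
    assert (C * vnorm (vsub y (cvec l2)) <= C * eps) by (apply Rmult_le_compat_l; lra).
    replace (F (vadd x y) - (F x + F y))
      with ((F (vadd x y) - (cval l1 + cval l2)) - (F x - cval l1) - (F y - cval l2)) by ring.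
    eapply Rle_trans; [apply Rabs_triang|]. eapply Rle_trans; [apply Rplus_le_compat_r, Rabs_triang|].
    rewrite !Rabs_Ropp. lra.
  - intros a x. apply Rminus_diag_uniq. pose proof (Rabs_pos a).
    apply (small_zero _ (2 * Rabs a * C)); [apply Rmult_le_pos; lra|].
    intros eps Heps. destruct (Hd x eps Heps) as [l [Hl N]].
    pose proof (Fc x l Hl) as A1. pose proof (Fc (vscal a x) (cscale a l) (over_scale _ _ _ Hl)) as A2.
    rewrite cval_scale, cvec_scale, vsub_scalscal, vnormZ in A2.
    replace (F (vscal a x) - a * F x) with ((F (vscal a x) - a * cval l) - a * (F x - cval l)) by ring.
    eapply Rle_trans; [apply Rabs_triang|]. rewrite Rabs_Ropp, Rabs_mult.
    assert (Rabs a * Rabs (F x - cval l) <= Rabs a * (C * eps)).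
    { apply Rmult_le_compat_l; auto. eapply Rle_trans; [exact A1|]. apply Rmult_le_compat_l; lra. }
    assert (C * (Rabs a * vnorm (vsub x (cvec l))) <= C * (Rabs a * eps)).
    { apply Rmult_le_compat_l; auto. apply Rmult_le_compat_l; lra. }
    nra.
  - exists C. intros x. pose proof (Fc x nil ltac:(constructor)) as K. simpl in K.
    now rewrite vsub0, Rminus_0_r in K.
  - intros w r Hwr. pose proof (Fc w ((1, (w, r)) :: nil) ltac:(now repeat constructor)) as K.
    simpl in K. rewrite vscal1, vadd0, vsub_self, vnorm0, Rmult_0_r in K.
    replace (1 * r + 0) with r in K by ring.
    apply Rminus_diag_uniq. destruct (Req_dec (F w - r) 0) as [|Hn]; auto.
    pose proof (Rabs_pos_lt _ Hn). lra.
Qed.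

End Combinations.

(** Transfinite extension along a dense set [D] indexed injectively by a
    well-order [I]: the value at the [i]-th point of [D] is chosen by
    [extend_point], given all values at earlier points. *)
Section TransfiniteExtension.
Variables (X : RBanach) (I : Type) (lt : I -> I -> Prop) (D : X -> Prop) (e : sub X D -> I).
Variables (G : X -> R -> Prop) (C : R).
Hypotheses (Hwo : well_order lt) (He : forall a b, e a = e b -> a = b).
Hypotheses (HC : 0 <= C) (HG : bounded_by G C).

Definition with_values (g : I -> R) (P : I -> Prop) : X -> R -> Prop :=
  fun w r => G w r \/ exists d, P (e d) /\ w = proj1_sig d /\ r = g (e d).

Lemma with_values_finite (g : I -> R) (P : I -> Prop) (l : list (R * (X * R))) :
  over (with_values g P) l ->
  exists ks, (forall k, In k ks -> P k) /\ over (with_values g (fun k => In k ks)) l.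
Proof.
  induction l as [|p l IH]; intros H.
  - exists nil. split; [intros _ []|constructor].
  - inversion H as [|? ? Hp Hl]; subst. destruct (IH Hl) as [ks [K1 K2]].
    destruct Hp as [Hp | [d [Pd [Hw Hr]]]].
    + exists ks. split; auto. constructor; [now left|auto].
    + exists (e d :: ks). split; [intros k [<-|Hk]; auto|].
      constructor; [right; exists d; split; [now left|auto]|].
      eapply over_mono; [|exact K2].
      intros w r [A|[d' [B1 B2]]]; [now left|right; exists d'; split; [now right|auto]].
Qed.

(** Boundedness is checked on the initial pieces [{k | k <= m}], since a
    combination only involves indices below its largest one. *)
Lemma bounded_via_max (g : I -> R) (P : I -> Prop) :
  (forall m, P m -> bounded_by (with_values g (fun k => lt k m \/ k = m)) C) ->
  bounded_by (with_values g P) C.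
Proof.
  intros Hm l Hl. destruct (with_values_finite g P l Hl) as [ks [K1 K2]].
  destruct ks as [|k0 ks'].
  - apply HG. eapply over_mono; [|exact K2]. intros w r [A|[d [[] _]]]; auto.
  - destruct (list_max I lt Hwo (k0 :: ks') ltac:(congruence)) as [m [Hm1 Hm2]].
    apply (Hm m (K1 m Hm1)). eapply over_mono; [|exact K2].
    intros w r [A|[d [B1 B2]]]; [now left|right; exists d; split; auto].
Qed.

Definition admissible (i : I) (rec : forall j, lt j i -> R) (c : R) : Prop :=
  bounded_by (fun w r => G w r \/
      (exists d j (H : lt j i), e d = j /\ w = proj1_sig d /\ r = rec j H) \/
      (exists d, e d = i /\ w = proj1_sig d /\ r = c)) C.

Definition ext_value : I -> R :=
  Fix (wo_wf _ Hwo) (fun _ => R) (fun i rec => epsilon (inhabits 0) (admissible i rec)).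

Lemma ext_value_bounded_le (i : I) :
  bounded_by (with_values ext_value (fun k => lt k i \/ k = i)) C.
Proof.
  induction i as [i IH] using (well_founded_induction (wo_wf _ Hwo)).
  assert (Hlt : bounded_by (with_values ext_value (fun k => lt k i)) C) by now apply bounded_via_max.
  assert (Spec : admissible i (fun j _ => ext_value j) (ext_value i)).
  { unfold ext_value at 2. rewrite Fix_unfold. fold ext_value. apply epsilon_spec.
    destruct (classic (exists d, e d = i)) as [[d0 Hd0]|Hnd].
    - destruct (extend_point X (with_values ext_value (fun k => lt k i)) C (proj1_sig d0) HC Hlt)
        as [c Hc].
      exists c. intros l Hl. apply Hc. eapply over_mono; [|exact Hl].
      intros w r [A|[[d [j [H [B1 [B2 B3]]]]]|[d [B1 [B2 B3]]]]].
      + now left; left.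
      + left; right. exists d. now subst.
      + right. assert (d = d0) by (apply He; congruence). now subst.
    - exists 0. intros l Hl. apply Hlt. eapply over_mono; [|exact Hl].
      intros w r [A|[[d [j [H [B1 [B2 B3]]]]]|[d [B1 [B2 B3]]]]].
      + now left.
      + right. exists d. now subst.
      + exfalso; apply Hnd; eauto. }
  intros l Hl. apply Spec. eapply over_mono; [|exact Hl].
  intros w r [A|[d [[B|B] [B2 B3]]]].
  - now left.
  - right; left. now exists d, (e d), B.
  - right; right. exists d. now subst.
Qed.

Lemma ext_value_bounded : bounded_by (with_values ext_value (fun _ => True)) C.
Proof. apply bounded_via_max. intros m _. apply ext_value_bounded_le. Qed.

End TransfiniteExtension.

Theorem hahn_banach (X : RBanach) (I : Type) (lt : I -> I -> Prop) (D : X -> Prop)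
  (e : sub X D -> I) (G : X -> R -> Prop) (C : R) :
  well_order lt -> dense D -> (forall a b, e a = e b -> a = b) -> 0 <= C -> bounded_by G C ->
  exists F, in_dual F /\ forall w r, G w r -> F w = r.
Proof.
  intros Hwo HD He HC HG.
  set (g := ext_value X I lt D e G C Hwo).
  destruct (extend_dense X (with_values X I D e G g (fun _ => True)) C HC) as [F [HF1 HF2]].
  - now apply ext_value_bounded.
  - intros x eps Heps. destruct (HD x eps Heps) as [d [Dd Hd]].
    exists ((1, (d, g (e (exist _ d Dd)))) :: nil). split.
    + constructor; [|constructor]. right. now exists (exist _ d Dd).
    + simpl. now rewrite vscal1, vadd0.
  - exists F. split; auto. intros w r Hwr. apply HF2. now left.
Qed.

(** * Finite-dimensional linear algebra *)

Fixpoint rsum (n : nat) (f : nat -> R) : R :=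
  match n with O => 0 | S n => rsum n f + f n end.

Lemma rsum_ext n f g : (forall i, (i < n)%nat -> f i = g i) -> rsum n f = rsum n g.
Proof. induction n; simpl; intros H; auto. rewrite IHn, H; auto. Qed.

Lemma rsum_plus n f g : rsum n (fun i => f i + g i) = rsum n f + rsum n g.
Proof. induction n; simpl; [ring|rewrite IHn; ring]. Qed.

Lemma rsum_scal n a f : rsum n (fun i => a * f i) = a * rsum n f.
Proof. induction n; simpl; [ring|rewrite IHn; ring]. Qed.

Lemma rsum_zero n : rsum n (fun _ => 0) = 0.
Proof. induction n; simpl; [ring|rewrite IHn; ring]. Qed.

Lemma rsum_delta n k t : (k < n)%nat -> rsum n (fun i => if Nat.eq_dec i k then t else 0) = t.
Proof.
  induction n; intros H; [lia|]. simpl. destruct (Nat.eq_dec n k).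
  - subst. rewrite (rsum_ext _ _ (fun _ => 0)), rsum_zero; [ring|].
    intros i Hi. destruct (Nat.eq_dec i k); [lia|auto].
  - rewrite IHn; [ring|lia].
Qed.

Definition nontrivial_solution (m : nat) (B : nat -> nat -> R) (c : nat -> R) : Prop :=
  (exists i, (i <= m)%nat /\ c i <> 0) /\
  forall j, (j < m)%nat -> rsum (S m) (fun i => c i * B i j) = 0.

Definition solvable (m : nat) : Prop := forall B, exists c, nontrivial_solution m B c.

(** Pivot on the last unknown: eliminate it using the last equation. *)
Lemma solve_pivot_last m : solvable m ->
  forall B, B (S m) m <> 0 -> exists c, nontrivial_solution (S m) B c.
Proof.
  intros IH B Ha.
  destruct (IH (fun i j => B i j - B i m / B (S m) m * B (S m) j)) as [c' [[i0 [Hi0 Hc0]] Hc']].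
  set (K := - rsum (S m) (fun i => c' i * B i m) / B (S m) m).
  exists (fun i => if Nat.leb i m then c' i else K). split.
  - exists i0. split; [lia|]. destruct (Nat.leb_spec i0 m); [auto|lia].
  - intros j Hj. change (rsum (S (S m)) ?f) with (rsum (S m) f + f (S m)); cbv beta.
    rewrite (rsum_ext _ _ (fun i => c' i * B i j))
      by (intros i Hi; destruct (Nat.leb_spec i m); [auto|lia]).
    destruct (Nat.leb_spec (S m) m); [lia|]. unfold K.
    destruct (Nat.eq_dec j m) as [->|Hjm]; [field; auto|].
    pose proof (Hc' j ltac:(lia)) as E.
    rewrite (rsum_ext _ _ (fun i => c' i * B i j + (- (B (S m) j / B (S m) m)) * (c' i * B i m))) in E
      by (intros; field; auto).
    rewrite rsum_plus, rsum_scal in E. rewrite <- E. field. auto.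
Qed.

(** Pivot on an earlier unknown [k]: add equation column [k] to the last unknown,
    solve by [solve_pivot_last], and transport the solution back. *)
Lemma solve_pivot_other m : solvable m ->
  forall B k, (k <= m)%nat -> B k m <> 0 -> B (S m) m = 0 -> exists c, nontrivial_solution (S m) B c.
Proof.
  intros IH B k Hk Hbk Ha.
  destruct (solve_pivot_last m IH (fun i j => if Nat.eq_dec i (S m) then B (S m) j + B k j else B i j))
    as [c'' [[i0 [Hi0 Hc0]] Hc'']].
  { destruct (Nat.eq_dec (S m) (S m)); [|lia]. rewrite Ha. lra. }
  exists (fun i => if Nat.eq_dec i (S m) then c'' (S m)
                   else c'' i + (if Nat.eq_dec i k then c'' (S m) else 0)).
  split.
  - destruct (Req_dec (c'' (S m)) 0) as [Hz|Hz].
    + exists i0. assert (i0 <> S m) by (intro; subst; auto). split; auto.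
      destruct (Nat.eq_dec i0 (S m)); [lia|]. destruct (Nat.eq_dec i0 k); rewrite ?Hz; lra.
    + exists (S m). split; auto. destruct (Nat.eq_dec (S m) (S m)); [auto|lia].
  - intros j Hj. etransitivity; [|exact (Hc'' j Hj)].
    change (rsum (S (S m)) ?f) with (rsum (S m) f + f (S m)); cbv beta.
    destruct (Nat.eq_dec (S m) (S m)); [|lia].
    rewrite (rsum_ext _ _ (fun i => c'' i * B i j + (if Nat.eq_dec i k then c'' (S m) * B k j else 0))).
    + rewrite rsum_plus, rsum_delta by lia.
      rewrite (rsum_ext (S m) (fun i => c'' i * (if Nat.eq_dec i (S m) then B (S m) j + B k j else B i j))
                 (fun i => c'' i * B i j)); [ring|].
      intros i Hi; destruct (Nat.eq_dec i (S m)); [lia|auto].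
    + intros i Hi; destruct (Nat.eq_dec i (S m)); [lia|]. destruct (Nat.eq_dec i k); [subst|]; ring.
Qed.

Lemma solve_zero_column m : solvable m ->
  forall B, (forall i, (i <= m)%nat -> B i m = 0) -> exists c, nontrivial_solution (S m) B c.
Proof.
  intros IH B Hz. destruct (IH B) as [c' [[i0 [Hi0 Hc0]] Hc']].
  exists (fun i => if Nat.leb i m then c' i else 0). split.
  - exists i0. split; [lia|]. destruct (Nat.leb_spec i0 m); [auto|lia].
  - intros j Hj. change (rsum (S (S m)) ?f) with (rsum (S m) f + f (S m)); cbv beta.
    destruct (Nat.leb_spec (S m) m); [lia|].
    rewrite (rsum_ext _ _ (fun i => c' i * B i j)) by (intros i Hi; destruct (Nat.leb_spec i m); [auto|lia]).
    destruct (Nat.eq_dec j m) as [->|Hjm].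
    + rewrite (rsum_ext _ _ (fun _ => 0)); [rewrite rsum_zero; ring|].
      intros i Hi. rewrite Hz by lia. ring.
    + rewrite Hc' by lia. ring.
Qed.

Lemma homogeneous_solvable m : solvable m.
Proof.
  induction m as [|m IH]; intros B.
  - exists (fun _ => 1). split; [exists 0%nat; split; [lia|lra]|intros; lia].
  - destruct (Req_dec (B (S m) m) 0) as [Ha|Ha]; [|now apply solve_pivot_last].
    destruct (classic (exists k, (k <= m)%nat /\ B k m <> 0)) as [[k [Hk Hbk]]|Hn].
    + now apply (solve_pivot_other m IH B k).
    + apply solve_zero_column; auto. intros i Hi. apply NNPP. intros Hb. apply Hn. eauto.
Qed.

Section Lincomb.
Variable X : RBanach.
Implicit Types (v w : nat -> X) (c : nat -> R).

Lemma lincomb_ext n c c' v : (forall i, (i < n)%nat -> c i = c' i) -> lincomb n c v = lincomb n c' v.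
Proof. induction n; simpl; intros H; auto. rewrite IHn, H; auto. Qed.

Lemma lincomb_add n c d v : lincomb n (fun i => c i + d i) v = vadd (lincomb n c v) (lincomb n d v).
Proof.
  induction n; simpl; [now rewrite vadd0|].
  rewrite IHn, vscalDl, <- !vaddA. f_equal. rewrite !vaddA. f_equal. apply vaddC.
Qed.

Lemma lincomb_scal n a c v : lincomb n (fun i => a * c i) v = vscal a (lincomb n c v).
Proof. induction n; simpl; [now rewrite vscal0r|now rewrite IHn, vscalDr, vscalA]. Qed.

Lemma lincomb_zero n v : lincomb n (fun _ => 0) v = vzero.
Proof. induction n; simpl; auto. now rewrite IHn, vscal0, vadd0. Qed.

Lemma lincomb_delta n k t v : (k < n)%nat ->
  lincomb n (fun i => if Nat.eq_dec i k then t else 0) v = vscal t (v k).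
Proof.
  induction n; intros H; [lia|]. simpl. destruct (Nat.eq_dec n k).
  - subst. rewrite (lincomb_ext _ _ (fun _ => 0)), lincomb_zero, vadd0l; auto.
    intros i Hi. destruct (Nat.eq_dec i k); [lia|auto].
  - rewrite IHn by lia. now rewrite vscal0, vadd0.
Qed.

Lemma vsub_lincomb m c (d : nat -> R) v : vsub (lincomb m c v) (lincomb m d v) = lincomb m (fun i => c i - d i) v.
Proof. rewrite vsub_scal, <- lincomb_scal, <- lincomb_add. apply lincomb_ext. intros; ring. Qed.

Lemma lincomb_compose n m c v w (B : nat -> nat -> R) :
  (forall i, (i < n)%nat -> v i = lincomb m (B i) w) ->
  lincomb n c v = lincomb m (fun j => rsum n (fun i => c i * B i j)) w.
Proof.
  induction n; intros H; simpl; [now rewrite lincomb_zero|].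
  rewrite IHn by (intros; apply H; lia). rewrite H by lia.
  now rewrite <- lincomb_scal, <- lincomb_add.
Qed.

Lemma steinitz m v w :
  (forall i, (i <= m)%nat -> exists b, v i = lincomb m b w) ->
  exists c, (exists i, (i <= m)%nat /\ c i <> 0) /\ lincomb (S m) c v = vzero.
Proof.
  intros H.
  set (B := fun i => epsilon (inhabits (fun _ : nat => 0)) (fun b => v i = lincomb m b w)).
  assert (HB : forall i, (i < S m)%nat -> v i = lincomb m (B i) w).
  { intros i Hi. unfold B. apply epsilon_spec. apply H; lia. }
  destruct (homogeneous_solvable m B) as [c [Hc1 Hc2]]. exists c. split; auto.
  rewrite (lincomb_compose (S m) m c v w B HB), (lincomb_ext _ _ (fun _ => 0)); auto.
  apply lincomb_zero.
Qed.

Lemma not_in_span m w : infinite_dimensional X -> exists z, ~ exists b, z = lincomb m b w.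
Proof.
  intros Hinf. destruct (Hinf (S m)) as [v Hv]. apply NNPP. intros Hn.
  destruct (steinitz m v w) as [c [[i [Hi Hci]] Hc]].
  - intros i _. apply NNPP. intro H'. apply Hn. now exists (v i).
  - apply Hci. apply (Hv c Hc). lia.
Qed.

Lemma coefficient_bound n v d :
  (forall c, d <= vnorm (vsub (v n) (lincomb n c v))) ->
  forall c, Rabs (c n) * d <= vnorm (lincomb (S n) c v).
Proof.
  intros Hd c. destruct (Req_dec (c n) 0) as [Hz|Hz].
  - rewrite Hz, Rabs_R0, Rmult_0_l. apply vnorm_ge0.
  - assert (E : lincomb (S n) c v = vscal (c n) (vsub (v n) (lincomb n (fun i => - c i / c n) v))).
    { simpl. rewrite vsub_scal, vscalDr, <- !lincomb_scal, vaddC. f_equal.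
      apply lincomb_ext. intros; field; auto. }
    rewrite E, vnormZ. apply Rmult_le_compat_l; [apply Rabs_pos|apply Hd].
Qed.

Definition approx_by_span (n : nat) (v : nat -> X) (x : X) : Prop :=
  forall eps, 0 < eps -> exists c, vnorm (vsub x (lincomb n c v)) < eps.

(** Inductive step of closedness of finite-dimensional spans, when [v_n] is at
    positive distance from the previous span: the [n]-th coefficients of good
    approximations form a Cauchy sequence, whose limit [T] reduces to [x - T v_n]. *)
Lemma closed_span_step n v x d :
  (forall y, approx_by_span n v y -> exists c, y = lincomb n c v) ->
  0 < d -> (forall c, d <= vnorm (vsub (v n) (lincomb n c v))) ->
  approx_by_span (S n) v x -> exists c, x = lincomb (S n) c v.
Proof.
  intros IH Hd0 Hd Hx. pose proof (coefficient_bound n v d Hd) as Low.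
  set (ck := fun k : nat => epsilon (inhabits (fun _ : nat => 0))
               (fun c => vnorm (vsub x (lincomb (S n) c v)) < / (INR k + 1))).
  assert (Hck : forall k, vnorm (vsub x (lincomb (S n) (ck k) v)) < / (INR k + 1)).
  { intros k. unfold ck. apply epsilon_spec, Hx, Rinv_0_lt_compat. pose proof (pos_INR k). lra. }
  set (t := fun k => ck k n).
  assert (Hcau : Cauchy_crit t).
  { intros eps Heps. assert (Hp : 0 < eps * d / 2) by nra. destruct (inv_small _ Hp) as [N HN].
    exists N. intros k m Hk Hm. unfold Rdist.
    pose proof (Low (fun i => ck k i - ck m i)) as K1. cbv beta in K1.
    rewrite <- (vsub_lincomb (S n) (ck k) (ck m) v) in K1.
    pose proof (vnorm_tri_sub X (lincomb (S n) (ck k) v) x (lincomb (S n) (ck m) v)) as K2.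
    rewrite (vnorm_sub_sym X (lincomb (S n) (ck k) v) x) in K2.
    pose proof (Hck k). pose proof (Hck m). pose proof (HN k Hk). pose proof (HN m Hm).
    unfold t. apply (Rmult_lt_reg_r d); auto. lra. }
  destruct (R_complete t Hcau) as [T HT].
  destruct (IH (vsub x (vscal T (v n)))) as [c' Hc'].
  - intros eps Heps. pose proof (vnorm_ge0 X (v n)).
    destruct (inv_small (eps / 2)) as [N1 HN1]; [lra|].
    destruct (HT (eps / (2 * (vnorm (v n) + 1)))) as [N2 HN2]; [apply Rdiv_lt_0_compat; lra|].
    set (k := Nat.max N1 N2). exists (ck k).
    assert (E : vsub (vsub x (vscal T (v n))) (lincomb n (ck k) v) =
                vadd (vsub x (lincomb (S n) (ck k) v)) (vscal (t k - T) (v n))).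
    { simpl. apply vsub_shift. }
    rewrite E. eapply Rle_lt_trans; [apply vnorm_triangle|]. rewrite vnormZ.
    pose proof (Hck k). pose proof (HN1 k ltac:(lia)). pose proof (HN2 k ltac:(lia)) as K3.
    unfold Rdist in K3.
    assert (Rabs (t k - T) * vnorm (v n) <= eps / (2 * (vnorm (v n) + 1)) * vnorm (v n))
      by (apply Rmult_le_compat_r; lra).
    pose proof (frac_le eps (vnorm (v n)) Heps (vnorm_ge0 X (v n))). lra.
  - exists (fun i => if Nat.eq_dec i n then T else c' i).
    apply vsub_solve in Hc'. rewrite Hc'. simpl. destruct (Nat.eq_dec n n); [|lia]. f_equal.
    apply lincomb_ext. intros i Hi. destruct (Nat.eq_dec i n); [lia|auto].
Qed.

Lemma closed_span n v x : approx_by_span n v x -> exists c, x = lincomb n c v.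
Proof.
  revert x. induction n as [|n IH]; intros x Hx.
  - exists (fun _ => 0). simpl. apply vsub_eq0. rewrite vsub0.
    destruct (Req_dec (vnorm x) 0) as [|Hn]; auto. exfalso.
    assert (Hpos : 0 < vnorm x) by (pose proof (vnorm_ge0 X x); lra).
    destruct (Hx (vnorm x) Hpos) as [c Hc]. simpl in Hc. rewrite vsub0 in Hc. lra.
  - destruct (classic (exists b, v n = lincomb n b v)) as [[b Hb]|Hnb].
    +
      destruct (IH x) as [c' Hc'].
      { intros eps Heps. destruct (Hx eps Heps) as [c Hc]. exists (fun i => c i + c n * b i).
        simpl in Hc. now rewrite Hb, <- lincomb_scal, <- lincomb_add in Hc. }
      exists (fun i => if Nat.eq_dec i n then 0 else c' i). simpl.
      destruct (Nat.eq_dec n n); [|lia]. rewrite vscal0, vadd0, Hc'. apply lincomb_ext.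
      intros i Hi. destruct (Nat.eq_dec i n); [lia|auto].
    +
      assert (Hd : exists d, 0 < d /\ forall c, d <= vnorm (vsub (v n) (lincomb n c v))).
      { apply NNPP. intros Hn. apply Hnb, IH. intros eps Heps. apply NNPP. intros Hn2.
        apply Hn. exists eps. split; auto. intros c. apply Rnot_lt_le. intros Hc. apply Hn2. now exists c. }
      destruct Hd as [d [Hd0 Hd]]. now apply (closed_span_step n v x d).
Qed.

End Lincomb.

(** * Sets smaller than the density have non-dense spans *)

Section Separation.
Variable X : RBanach.

(** The prescription "vanish on [Q]"; its combinations are the span of [Q]. *)
Definition vanish_on (Q : X -> Prop) : X -> R -> Prop := fun w r => Q w /\ r = 0.

Definition span_dense (Q : X -> Prop) : Prop :=
  forall z eps, 0 < eps -> exists l, over (vanish_on Q) l /\ vnorm (vsub z (cvec l)) < eps.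

Lemma cval_vanish (Q : X -> Prop) l : over (vanish_on Q) l -> cval l = 0.
Proof.
  induction l as [|[t [x r]] l IH]; intros H; simpl; auto.
  inversion H as [|? ? [_ Hr] Hl]; subst. simpl in Hr. rewrite Hr, IH; auto; ring.
Qed.

(** The span of a finite set is not dense in an infinite-dimensional space:
    it is a finite-dimensional, hence closed and proper, subspace. *)
Lemma finite_span_not_dense (Q : X -> Prop) (n : nat) :
  infinite_dimensional X -> card_le (sub X Q) (fin n) -> ~ span_dense Q.
Proof.
  intros Hinf [f Hf] Hdense.
  set (w := fun k => match excluded_middle_informative (exists q : sub X Q, proj1_sig (f q) = k) with
             | left H => proj1_sig (proj1_sig (constructive_indefinite_description _ H)) | right _ => vzero end).
  assert (Hw : forall q : sub X Q, w (proj1_sig (f q)) = proj1_sig q).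
  { intros q. unfold w. destruct (excluded_middle_informative _) as [H|H]; [|exfalso; apply H; eauto].
    destruct (constructive_indefinite_description _ H) as [q' Hq']. simpl. f_equal. now apply Hf, sub_eq. }
  assert (Hl : forall l, over (vanish_on Q) l -> exists c, cvec l = lincomb n c w).
  { induction l as [|[t [x r]] l IH]; intros Hl.
    - exists (fun _ => 0). now rewrite lincomb_zero.
    - inversion Hl as [|? ? [Hq _] Hl']; subst. destruct (IH Hl') as [c Hc]. simpl in Hq.
      set (k := proj1_sig (f (exist Q x Hq))).
      exists (fun i => c i + (if Nat.eq_dec i k then t else 0)).
      rewrite lincomb_add, lincomb_delta by (exact (proj2_sig (f (exist Q x Hq)))).
      simpl. rewrite Hc. unfold k. rewrite Hw. apply vaddC. }
  destruct (not_in_span X n w Hinf) as [z Hz]. apply Hz, closed_span.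
  intros eps Heps. destruct (Hdense z eps Heps) as [l [Hl' Hn]].
  destruct (Hl l Hl') as [c Hc]. exists c. now rewrite <- Hc.
Qed.

Definition ratcomb (Q : X -> Prop) (c : list (sub X Q * (Z * nat))) : X :=
  cvec (map (fun e => (IZR (fst (snd e)) / INR (S (snd (snd e))), (proj1_sig (fst e), 0))) c).

Lemma ratcomb_approx (Q : X -> Prop) l : over (vanish_on Q) l ->
  forall eps, 0 < eps -> exists c, vnorm (vsub (cvec l) (ratcomb Q c)) < eps.
Proof.
  induction l as [|[t [x r]] l IH]; intros Hl eps Heps.
  - exists nil. simpl. now rewrite vsub_self, vnorm0.
  - inversion Hl as [|? ? [Hq _] Hl']; subst. simpl in Hq.
    destruct (IH Hl' (eps / 2)) as [c Hc]; [lra|].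
    pose proof (vnorm_ge0 X x).
    destruct (rat_approx t (eps / (2 * (vnorm x + 1)))) as [p [n Hpn]]; [apply Rdiv_lt_0_compat; lra|].
    exists ((exist Q x Hq, (p, n)) :: c). unfold ratcomb in *. cbn [map cvec fst snd proj1_sig].
    rewrite vsub_addadd, vsub_scal_l.
    eapply Rle_lt_trans; [apply vnorm_triangle|]. rewrite vnormZ.
    assert (Rabs (t - IZR p / INR (S n)) * vnorm x <= eps / (2 * (vnorm x + 1)) * vnorm x)
      by (apply Rmult_le_compat_r; lra).
    pose proof (frac_le eps (vnorm x) Heps (vnorm_ge0 X x)). lra.
Qed.

End Separation.

Lemma rational_codes_le (A B : Type) :
  card_le nat A -> card_le (A * A) A -> card_le B A -> card_le (list (B * (Z * nat))) A.
Proof.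
  intros Hinf H2 HB. eapply cl_trans; [|apply list_code; auto]. apply cl_list.
  eapply cl_trans; [|exact H2]. apply cl_prod; auto.
  eapply cl_trans; [|exact H2]. apply cl_prod; auto.
  eapply cl_trans; [apply Z_nat2|]. eapply cl_trans; [apply cl_prod; exact Hinf|exact H2].
Qed.

(** A set of fewer than [dens X] points, with infinitely many points below its
    bound, has non-dense span: otherwise its rational combinations would be a
    dense set of size [< dens X]. *)
Lemma small_span_not_dense (X : RBanach) (I : Type) (lt : I -> I -> Prop) (al : I) (Q : X -> Prop) :
  initial_ordinal I lt -> dens_eq X I -> card_le nat (seg lt al) -> card_le (sub X Q) (seg lt al) ->
  ~ span_dense X Q.
Proof.
  intros Hio [_ Hdens] Hinf HQ Hdense.
  pose proof (initial_ordinal_wo _ _ Hio) as Hwo. destruct Hio as (_ & _ & _ & _ & Hini).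
  set (D' := fun x => exists c, ratcomb X Q c = x).
  assert (HD' : dense D').
  { intros x eps Heps. destruct (Hdense x (eps / 2)) as [l [Hl Hxl]]; [lra|].
    destruct (ratcomb_approx X Q l Hl (eps / 2)) as [c Hc]; [lra|].
    exists (ratcomb X Q c). split; [now exists c|].
    eapply Rle_lt_trans; [apply (vnorm_tri_sub X x (cvec l))|]. lra. }
  apply (Hini al). eapply cl_trans; [apply (Hdens D' HD')|].
  eapply cl_trans with (list (sub X Q * (Z * nat))).
  - apply (card_le_rel _ _ (fun x c => ratcomb X Q c = proj1_sig x)).
    + intros [x [c Hc]]. now exists c.
    + intros x x' c E E'. apply sub_eq. exact (eq_trans (eq_sym E) E').
  - apply rational_codes_le; auto. now apply hessenberg_seg.
Qed.

Lemma off_span_bounded (X : RBanach) (Q : X -> Prop) (z : X) (d : R) :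
  0 < d -> (forall l, over (vanish_on X Q) l -> d <= vnorm (vsub z (cvec l))) ->
  bounded_by (fun w r => vanish_on X Q w r \/ (w = z /\ r = 1)) (/ d).
Proof.
  intros Hd0 Hd l Hl. destruct (over_split X (vanish_on X Q) z 1 l Hl) as (l' & s & H1 & -> & ->).
  rewrite (cval_vanish X Q l' H1). replace (0 + s * 1) with s by ring.
  destruct (Req_dec s 0) as [->|Hs].
  - rewrite Rabs_R0. apply Rmult_le_pos; [left; now apply Rinv_0_lt_compat|apply vnorm_ge0].
  - assert (E : vadd (cvec l') (vscal s z) = vscal s (vsub z (cvec (cscale (- / s) l')))).
    { rewrite cvec_scale, vsub_scal, vscalDr, !vscalA. replace (s * -1 * - / s) with 1 by (field; auto).
      now rewrite vscal1, vaddC. }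
    rewrite E, vnormZ.
    pose proof (Hd (cscale (- / s) l') (over_scale _ _ _ _ H1)) as K.
    pose proof (Rabs_pos_lt s Hs).
    apply (Rmult_le_reg_l d); auto. rewrite <- Rmult_assoc, Rinv_r, Rmult_1_l by lra.
    rewrite (Rmult_comm d). apply Rmult_le_compat_l; lra.
Qed.

Lemma small_set_annihilator (X : RBanach) (I : Type) (lt : I -> I -> Prop) (al : I) (Q : X -> Prop) :
  infinite_dimensional X -> initial_ordinal I lt -> dens_eq X I -> card_le (sub X Q) (seg lt al) ->
  exists z F, in_dual F /\ F z = 1 /\ forall w, Q w -> F w = 0.
Proof.
  intros Hid Hio Hde HQ.
  assert (Hnd : ~ span_dense X Q).
  { destruct (finite_or_infinite (seg lt al)) as [Hi|[n Hn]].
    - now apply (small_span_not_dense X I lt al Q).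
    - apply (finite_span_not_dense X Q n Hid). eapply cl_trans; eauto. }
  destruct (not_all_ex_not _ _ Hnd) as [z Hz].
  destruct (not_all_ex_not _ _ Hz) as [d Hd].
  apply imply_to_and in Hd. destruct Hd as [Hd0 Hfar].
  destruct Hde as [[D [HD [e He]]] _].
  destruct (hahn_banach X I lt D e _ (/ d) (initial_ordinal_wo _ _ Hio) HD He
              ltac:(left; now apply Rinv_0_lt_compat) (off_span_bounded X Q z d Hd0 ltac:(
                intros l Hl; apply Rnot_lt_le; intros Hc; apply Hfar; now exists l)))
    as [F [HF1 HF2]].
  exists z, F. split; [|split]; auto. intros w Hw. apply HF2. now left.
Qed.

(** * The biorthogonal system *)

(** Recursion on the initial ordinal [I]: at stage [α] the points [x_β], [β < α],
    are fewer than [dens X], so [small_set_annihilator] provides [(x_α, x*_α)]. *)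
Theorem biorthogonal_system (X : RBanach) (I : Type) (lt : I -> I -> Prop) :
  infinite_dimensional X -> initial_ordinal I lt -> dens_eq X I ->
  exists (x : I -> X) (xs : I -> X -> R),
    (forall a, in_dual (xs a)) /\ (forall a, xs a (x a) = 1) /\ (forall a b, lt b a -> xs a (x b) = 0).
Proof.
  intros Hid Hio Hde. pose proof (wo_wf _ (initial_ordinal_wo _ _ Hio)) as Hwf.
  set (good := fun a (rec : forall b, lt b a -> X * (X -> R)) (p : X * (X -> R)) =>
         in_dual (snd p) /\ snd p (fst p) = 1 /\ forall b (H : lt b a), snd p (fst (rec b H)) = 0).
  set (P := Fix Hwf (fun _ => (X * (X -> R))%type)
              (fun a rec => epsilon (inhabits (@vzero X, fun _ : X => 0)) (good a rec))).
  assert (Hspec : forall a, good a (fun b _ => P b) (P a)).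
  { intros a. unfold P at 2. rewrite Fix_unfold. fold P. apply epsilon_spec.
    set (Q := fun w => exists b, lt b a /\ w = fst (P b)).
    destruct (small_set_annihilator X I lt a Q Hid Hio Hde) as [z [F [HF1 [HF2 HF3]]]].
    - apply (card_le_rel _ _ (fun (w : sub X Q) (b : seg lt a) => proj1_sig w = fst (P (proj1_sig b)))).
      + intros [w [b [Hb Hw]]]. now exists (exist _ b Hb).
      + intros w w' b E E'. apply sub_eq. congruence.
    - exists (z, F). split; [|split]; auto. intros b Hb. apply HF3. now exists b. }
  exists (fun a => fst (P a)), (fun a => snd (P a)).
  split; [|split]; intros; apply Hspec; auto.
Qed.

(** * The hereditary Lindelöf number of the dual ball *)

Lemma INR_close_eq (k m : nat) : Rabs (INR k - INR m) < 1 -> k = m.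
Proof.
  intros H. destruct (Nat.lt_total k m) as [Hl|[Hl|Hl]]; auto; exfalso.
  - assert (INR (S k) <= INR m) by (apply le_INR; lia).
    rewrite S_INR in *. unfold Rabs in H. destruct Rcase_abs; lra.
  - assert (INR (S m) <= INR k) by (apply le_INR; lia).
    rewrite S_INR in *. unfold Rabs in H. destruct Rcase_abs; lra.
Qed.

(** The density of a nonzero space is infinite: the multiples [k w] of a nonzero
    vector are [‖w‖]-separated, so they need distinct nearby points of [D]. *)
Lemma dens_infinite (X : RBanach) (I : Type) : infinite_dimensional X -> dens_eq X I -> card_le nat I.
Proof.
  intros Hid [[D [HD [e He]]] _]. destruct (Hid 1%nat) as [v Hv]. set (w := v 0%nat).
  assert (Hn : 0 < vnorm w).
  { destruct (Req_dec (vnorm w) 0) as [E|E]; [|pose proof (vnorm_ge0 X w); lra].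
    apply vnorm_eq0 in E. exfalso. pose proof (Hv (fun _ => 1)) as K. simpl in K. fold w in K.
    rewrite E, vscal0r, vadd0 in K. specialize (K eq_refl 0%nat ltac:(lia)). lra. }
  eapply cl_trans; [|exists e; exact He].
  apply (card_le_rel _ _ (fun k (d : sub X D) => vnorm (vsub (vscal (INR k) w) (proj1_sig d)) < vnorm w / 2)).
  - intros k. destruct (HD (vscal (INR k) w) (vnorm w / 2)) as [d [Dd Hd]]; [lra|].
    now exists (exist _ d Dd).
  - intros k m d Hk Hm. apply INR_close_eq.
    pose proof (vnorm_tri_sub X (vscal (INR k) w) (proj1_sig d) (vscal (INR m) w)) as K.
    rewrite vsub_scal_l, vnormZ, (vnorm_sub_sym X (proj1_sig d)) in K.
    apply (Rmult_lt_reg_r (vnorm w)); lra.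
Qed.

Lemma ball_dual (X : RBanach) (g : X -> R) : in_dual_ball g -> in_dual g.
Proof. intros [Hl Hb]. split; auto. exists 1. intros x. rewrite Rmult_1_l. auto. Qed.

(** Codes of weak*-basic neighbourhoods: finitely many points of [D], each with a
    rational target value, and a radius [1/(N+1)]. *)
Definition nbhd_code {X : RBanach} (D : X -> Prop) : Type := (list (sub X D * (Z * nat)) * nat)%type.

Definition in_nbhd {X : RBanach} {D : X -> Prop} (b : nbhd_code D) (g : X -> R) : Prop :=
  forall ent, In ent (fst b) ->
    Rabs (g (proj1_sig (fst ent)) - IZR (fst (snd ent)) / INR (S (snd (snd ent)))) < / INR (S (snd b)).

(** Inside the dual ball, every weak*-open set around [f] contains a coded
    neighbourhood of [f]: test points [x_i] are replaced by nearby points of [D]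
    (functionals in the ball are 1-Lipschitz) and values by rationals. *)
Lemma code_inside_open (X : RBanach) (D : X -> Prop) (U : (X -> R) -> Prop) (f : X -> R) :
  dense D -> weak_star_open U -> in_dual_ball f -> U f ->
  exists b : nbhd_code D, in_nbhd b f /\ forall g, in_dual_ball g -> in_nbhd b g -> U g.
Proof.
  intros HD HU Hfb Hf. destruct (HU f (ball_dual X f Hfb) Hf) as (n & xs & eps & Heps & Hn).
  assert (Hp : 0 < eps / 4) by lra. destruct (inv_small _ Hp) as [N HN]. specialize (HN N (le_n _)).
  rewrite <- S_INR in HN. set (eta := / INR (S N)) in *.
  assert (Heta : 0 < eta) by (apply Rinv_0_lt_compat, lt_0_INR; lia).
  assert (HL : forall m, exists L : list (sub X D * (Z * nat)),
     (forall ent, In ent L -> Rabs (f (proj1_sig (fst ent)) - IZR (fst (snd ent)) / INR (S (snd (snd ent)))) < eta) /\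
     forall i, (i < m)%nat -> exists ent, In ent L /\ vnorm (vsub (xs i) (proj1_sig (fst ent))) < eps / 4).
  { induction m as [|m [L [L1 L2]]].
    - exists nil. split; [intros _ []|intros; lia].
    - destruct (HD (xs m) (eps / 4) Hp) as [d [Dd Hd]].
      destruct (rat_approx (f d) eta Heta) as [p [q Hpq]].
      exists ((exist D d Dd, (p, q)) :: L). split; [intros ent [<-|Hin]; auto|].
      intros i Hi. destruct (Nat.eq_dec i m) as [->|Him].
      + exists (exist D d Dd, (p, q)). split; [now left|auto].
      + destruct (L2 i ltac:(lia)) as [ent [E1 E2]]. exists ent. split; [now right|auto]. }
  destruct (HL n) as [L [L1 L2]]. exists (L, N). split; [exact L1|].
  intros g Hgb HgB. apply Hn; [now apply ball_dual|].
  intros i Hi. destruct (L2 i Hi) as [[[d Dd] [p q]] [Ein Ed]]. cbn [fst snd proj1_sig] in *.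
  pose proof (HgB _ Ein) as A1. pose proof (L1 _ Ein) as A2. cbn [fst snd proj1_sig] in A1, A2.
  fold eta in A1.
  destruct Hgb as [Hgl Hgn], Hfb as [Hfl Hfn].
  pose proof (Hgn (vsub (xs i) d)) as A3. pose proof (Hfn (vsub (xs i) d)) as A4.
  rewrite lin_sub in A3, A4 by auto.
  assert (Rabs (g (xs i) - f (xs i)) <= Rabs (g (xs i) - g d) + Rabs (g d - IZR p / INR (S q))
          + Rabs (f d - IZR p / INR (S q)) + Rabs (f (xs i) - f d)).
  { unfold Rabs; repeat destruct Rcase_abs; lra. }
  lra.
Qed.

(** [hL(B_{X*}) <= dens X]: choose, for each code of a neighbourhood contained in
    some member of the cover, one such member; there are only [dens X] codes. *)
Lemma hL_le_dens (X : RBanach) (I : Type) (lt : I -> I -> Prop) :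
  infinite_dimensional X -> initial_ordinal I lt -> dens_eq X I ->
  forall Y : (X -> R) -> Prop, (forall f, Y f -> in_dual_ball f) -> lindelof_le Y I.
Proof.
  intros Hid Hio Hde Y HY K U HU Hcov.
  pose proof (dens_infinite X I Hid Hde) as Hnat.
  pose proof (hessenberg_initial I lt Hio Hnat) as H2.
  destruct Hde as [[D [HD [e He]]] _].
  destruct (classic (inhabited K)) as [inh|Hne].
  2:{ exists (fun _ => False). split.
      - exists (fun s => False_rect I (proj2_sig s)). intros [a []].
      - intros f Hf. destruct (Hcov f Hf) as [k _]. exfalso. exact (Hne (inhabits k)). }
  set (good := fun (b : nbhd_code D) k => forall g, in_dual_ball g -> in_nbhd b g -> U k g).
  set (ch := fun b => epsilon inh (good b)).
  exists (fun k => exists b, (exists k', good b k') /\ k = ch b). split.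
  - eapply cl_trans with (nbhd_code D).
    + apply (card_le_rel _ _ (fun s b => (exists k', good b k') /\ proj1_sig s = ch b)).
      * intros [s Hs]. exact Hs.
      * intros s s' b [_ E] [_ E']. apply sub_eq. congruence.
    + eapply cl_trans; [|exact H2]. apply cl_prod; auto.
      apply rational_codes_le; auto. now exists e.
  - intros f Hf. destruct (Hcov f Hf) as [k0 Hk0].
    destruct (code_inside_open X D (U k0) f HD (HU k0) (HY f Hf) Hk0) as [b [Hb Hgood]].
    exists (ch b). split; [exists b; eauto|].
    apply (epsilon_spec inh (good b) (ex_intro _ k0 Hgood)); auto.
Qed.

Lemma ball_biorthogonal (X : RBanach) (I : Type) (lt : I -> I -> Prop) :
  infinite_dimensional X -> initial_ordinal I lt -> dens_eq X I ->
  exists (x : I -> X) (y : I -> X -> R),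
    (forall a, in_dual_ball (y a)) /\ (forall a, 0 < y a (x a)) /\ (forall a b, lt b a -> y a (x b) = 0).
Proof.
  intros Hid Hio Hde. destruct (biorthogonal_system X I lt Hid Hio Hde) as [x [xs [Hd [H1 H0]]]].
  assert (HC : forall a, exists M, 1 <= M /\ forall v, Rabs (xs a v) <= M * vnorm v).
  { intros a. destruct (proj2 (Hd a)) as [C HC]. exists (Rmax 1 C). split; [apply Rmax_l|].
    intros v. eapply Rle_trans; [apply HC|]. apply Rmult_le_compat_r; [apply vnorm_ge0|apply Rmax_r]. }
  set (M := fun a => proj1_sig (constructive_indefinite_description _ (HC a))).
  assert (HM : forall a, 1 <= M a /\ forall v, Rabs (xs a v) <= M a * vnorm v)
    by (intros a; unfold M; now destruct (constructive_indefinite_description _ (HC a))).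
  exists x, (fun a v => xs a v / M a). split; [|split].
  - intros a. destruct (Hd a) as [[Ha Hs] _]. destruct (HM a) as [M1 M2]. split; [split|].
    + intros u v. rewrite Ha. field. lra.
    + intros t v. rewrite Hs. field. lra.
    + intros v. unfold Rdiv. rewrite Rabs_mult, Rabs_inv, (Rabs_right (M a)) by lra.
      apply (Rmult_le_reg_r (M a)); [lra|]. rewrite Rmult_assoc, Rinv_l, Rmult_1_r by lra.
      rewrite Rmult_comm. apply M2.
  - intros a. rewrite H1. destruct (HM a). apply Rdiv_lt_0_compat; lra.
  - intros a b H. rewrite H0 by auto. unfold Rdiv. ring.
Qed.

(** Covering a left-separated family [{y_b | b ∈ T}] by the weak*-open sets
    [{g | g(x_k) > 0}] ([k ∈ T]): a subcover indexed by [Sub] dominates [T], i.e.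
    every [b ∈ T] lies below some [k ∈ Sub]. *)
Lemma left_separated_cover (X : RBanach) (I : Type) (lt : I -> I -> Prop) (x : I -> X)
  (y : I -> X -> R) (T : I -> Prop) (J : Type) :
  well_order lt -> (forall a, 0 < y a (x a)) -> (forall a b, lt b a -> y a (x b) = 0) ->
  lindelof_le (fun g => exists b, T b /\ g = y b) J ->
  exists Sub : sub I T -> Prop, card_le (sub (sub I T) Sub) J /\
    forall b, T b -> exists k, Sub k /\ (lt b (proj1_sig k) \/ b = proj1_sig k).
Proof.
  intros [_ Htri _] Hy1 Hy0 HL.
  destruct (HL (sub I T) (fun k g => 0 < g (x (proj1_sig k)))) as [Sub [HS1 HS2]].
  - intros k f Hf Hfk. exists 1%nat, (fun _ => x (proj1_sig k)), (f (x (proj1_sig k))). split; auto.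
    intros g Hg Hn. specialize (Hn 0%nat ltac:(lia)). unfold Rabs in Hn. destruct Rcase_abs in Hn; lra.
  - intros f [b [Tb ->]]. exists (exist T b Tb). simpl. auto.
  - exists Sub. split; auto. intros b Tb.
    destruct (HS2 (y b) (ex_intro _ b (conj Tb eq_refl))) as [k [Sk Uk]].
    exists k. split; auto. destruct (Htri b (proj1_sig k)) as [H|[H|H]]; auto.
    exfalso. rewrite Hy0 in Uk by auto. lra.
Qed.

Lemma union_le (A K J : Type) (piece : A -> K -> Prop) :
  (forall a, exists k, piece a k) -> (forall k, card_le (sub A (fun a => piece a k)) J) ->
  card_le A (K * J).
Proof.
  intros Hcov Hk. set (h := fun k => proj1_sig (constructive_indefinite_description _ (Hk k))).
  assert (Hh : forall k a a', h k a = h k a' -> a = a')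
    by (intros k; unfold h; destruct (constructive_indefinite_description _ (Hk k)); auto).
  apply (card_le_rel _ _ (fun a p => exists H : piece a (fst p), h (fst p) (exist _ a H) = snd p)).
  - intros a. destruct (Hcov a) as [k Hka]. now exists (k, h k (exist _ a Hka)), Hka.
  - intros a a' [k j] [H E] [H' E']. simpl in *. rewrite <- E' in E.
    exact (f_equal (@proj1_sig _ _) (Hh k _ _ E)).
Qed.

(** The points whose initial segment injects into [J] do not inject into [J]
    (when [|J| < |I|]): otherwise the least point outside would be inside. *)
Lemma small_segments_large (I : Type) (lt : I -> I -> Prop) (J : Type) :
  well_order lt -> ~ card_le I J -> ~ card_le (sub I (fun b => card_le (seg lt b) J)) J.
Proof.
  intros Hwo HIJ HT. set (T := fun b => card_le (seg lt b) J) in *.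
  destruct (classic (forall b, T b)) as [Hall|Hn].
  - apply HIJ. eapply cl_trans; [|exact HT]. now apply cl_full_sub.
  - destruct (least_el I lt (fun b => ~ T b) (wo_wf _ Hwo)) as [g [Hg1 Hg2]].
    { apply not_all_ex_not, Hn. }
    apply Hg1. unfold T. eapply cl_trans; [|exact HT]. apply cl_sub. intros j Hj.
    apply NNPP. intros Hnj. exact (Hg2 j Hnj Hj).
Qed.

Section LowerBound.
Variables (X : RBanach) (I : Type) (lt : I -> I -> Prop) (x : I -> X) (y : I -> X -> R).
Hypotheses (Hio : initial_ordinal I lt) (Hnat : card_le nat I).
Hypotheses (Hy1 : forall a, 0 < y a (x a)) (Hy0 : forall a b, lt b a -> y a (x b) = 0).

(** For infinite [J < I]: the family of [y_b] with [|seg b| <= |J|] has Lindelöf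
    number [> |J|], since a dominating subfamily of size [|J|] would bound the
    whole family by [|J| × |J| = |J|]. *)
Lemma lower_bound_infinite (J : Type) :
  card_le J I -> ~ card_le I J -> card_le nat J ->
  ~ lindelof_le (fun g => exists b, card_le (seg lt b) J /\ g = y b) J.
Proof.
  intros HJI HIJ HJinf HL. pose proof (initial_ordinal_wo _ _ Hio) as Hwo.
  set (T := fun b => card_le (seg lt b) J).
  destruct (left_separated_cover X I lt x y T J Hwo Hy1 Hy0 HL) as [Sub [HS1 HS2]].
  apply (small_segments_large I lt J Hwo HIJ).
  eapply cl_trans with (sub (sub I T) Sub * J)%type.
  - apply (union_le _ _ _ (fun (b : sub I T) (k : sub (sub I T) Sub) =>
                              lt (proj1_sig b) (proj1_sig (proj1_sig k)) \/ proj1_sig b = proj1_sig (proj1_sig k))).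
    + intros [b Tb]. destruct (HS2 b Tb) as [k [Sk Hk]]. now exists (exist Sub k Sk).
    + intros [[k Tk] Sk]. simpl. eapply cl_trans with (segle lt k).
      * exists (fun b : sub (sub I T) (fun b => lt (proj1_sig b) k \/ proj1_sig b = k) =>
                  exist (fun j => lt j k \/ j = k) (proj1_sig (proj1_sig b)) (proj2_sig b)).
        intros b b' E. apply (f_equal (@proj1_sig _ _)) in E. simpl in E. now do 2 apply sub_eq.
      * eapply cl_trans; [apply segle_option|]. eapply cl_trans; [apply cl_option, Tk|].
        now apply inf_option.
  - eapply cl_trans; [apply cl_prod; [exact HS1|apply cl_refl]|].
    now apply (hessenberg_small I lt J Hwo).
Qed.

(** For finite [J]: a finite subcover of the whole family has a largest index [m],
    so [I] injects into [segle m], which is impossible for an initial ordinal. *)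
Lemma lower_bound_finite (J : Type) (n : nat) :
  card_le J (fin n) -> ~ lindelof_le (fun g => exists b, True /\ g = y b) J.
Proof.
  intros HJn HL. pose proof (initial_ordinal_wo _ _ Hio) as Hwo.
  destruct Hio as (_ & _ & _ & _ & Hini).
  destruct (left_separated_cover X I lt x y (fun _ => True) J Hwo Hy1 Hy0 HL) as [Sub [HS1 HS2]].
  destruct (fin_list _ n (cl_trans _ _ _ HS1 HJn)) as [l Hl].
  set (ls := map (fun s : sub (sub I (fun _ => True)) Sub => proj1_sig (proj1_sig s)) l).
  pose proof Hnat as [h0 _].
  destruct (list_max I lt Hwo ls) as [m [Hm1 Hm2]].
  { destruct (HS2 (h0 0%nat) Logic.I) as [k [Sk _]]. intros E.
    pose proof (Hl (exist Sub k Sk)). unfold ls in E. destruct l; [contradiction|discriminate]. }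
  assert (Hle : forall b, lt b m \/ b = m).
  { intros b. destruct (HS2 b Logic.I) as [k [Sk Hk]].
    assert (Hin : In (proj1_sig k) ls) by (unfold ls; apply in_map_iff; now exists (exist Sub k Sk)).
    destruct (Hm2 _ Hin) as [A|A]; destruct Hk as [B|B]; subst; auto.
    left. exact (wo_trans _ Hwo _ _ _ B A). }
  assert (CI : card_le I (option (seg lt m))).
  { eapply cl_trans; [|apply segle_option]. now apply cl_full_sub. }
  destruct (finite_or_infinite (seg lt m)) as [Hs|[n' Hn']].
  - apply (Hini m). eapply cl_trans; [exact CI|now apply inf_option].
  - apply (pigeon (S n')). eapply cl_trans; [exact Hnat|].
    eapply cl_trans; [exact CI|now apply fin_option].
Qed.

End LowerBound.

Lemma hL_ge_dens (X : RBanach) (I : Type) (lt : I -> I -> Prop) :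
  infinite_dimensional X -> initial_ordinal I lt -> dens_eq X I ->
  forall J : Type, card_le J I -> ~ card_le I J ->
  exists Y : (X -> R) -> Prop, (forall f, Y f -> in_dual_ball f) /\ ~ lindelof_le Y J.
Proof.
  intros Hid Hio Hde J HJI HIJ.
  pose proof (dens_infinite X I Hid Hde) as Hnat.
  destruct (ball_biorthogonal X I lt Hid Hio Hde) as [x [y [Hyb [Hy1 Hy0]]]].
  destruct (finite_or_infinite J) as [HJinf|[n HJn]].
  - exists (fun g => exists b, card_le (seg lt b) J /\ g = y b).
    split; [intros f [b [_ ->]]; auto|]. now apply (lower_bound_infinite X I lt x y).
  - exists (fun g => exists b, True /\ g = y b).
    split; [intros f [b [_ ->]]; auto|]. now apply (lower_bound_finite X I lt x y Hio Hnat Hy1 Hy0 J n).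
Qed.

Theorem mainTheorem17 (X : RBanach) (I : Type) (lt : I -> I -> Prop) :
  infinite_dimensional X ->
  initial_ordinal I lt ->
  dens_eq X I ->
  (exists (x : I -> X) (xs : I -> X -> R),
      (forall a, in_dual (xs a)) /\
      (forall a, xs a (x a) = 1) /\
      (forall a b, lt b a -> xs a (x b) = 0)) /\
  hL_dual_ball_eq X I.
Proof.
  intros Hid Hio Hde. split; [|split].
  - exact (biorthogonal_system X I lt Hid Hio Hde).
  - exact (hL_le_dens X I lt Hid Hio Hde).
  - exact (hL_ge_dens X I lt Hid Hio Hde).
Qed.
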